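(* Let $d<\infty$, let $V\subset\mathbb{B}_d$ be an analytic disc attached to the unit sphere and $f$ its embedding map. Suppose $f(\xi)=f(\zeta)$ for two distinct $\xi,\zeta\in\mathbb{T}$. If $h\in\mathcal{H}_f$ extends continuously to $\overline{\mathbb{D}}$, then $h(\xi)=h(\zeta)$.
   Context: $\mathbb{D}$ is the open unit disc, $\mathbb{T}$ the unit circle, $\mathbb{B}_d$ the open unit ball of $\mathbb{C}^d$. The Drury–Arveson space $H^2_d$ is the RKHS on $\mathbb{B}_d$ with kernel $1/(1-\langle z,w\rangle)$, with multiplier algebra $\mathcal{M}_d$. A variety is a common zero set in $\mathbb{B}_d$ of a family of functions from $\mathcal{M}_d$. An analytic disc attached to the unit sphere is a variety $V\subset\mathbb{B}_d$ ($d<\infty$) for which there is an injective analytic $f:\mathbb{D}\to\mathbb{B}_d$ with $f'(z)\neq0$ on $\mathbb{D}$, $V=f(\mathbb{D})$, $f$ extends to a $C^2$ map on $\overline{\mathbb{D}}$, and for $x\in\overline{\mathbb{D}}$, $\|f(x)\|=1$ iff $|x|=1$ ($f$ is the embedding map). $\mathcal{H}_f$ is the RKHS on $\mathbb{D}$ with kernel $k^f(z,w)=1/(1-\langle f(z),f(w)\rangle)$. *)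

From Stdlib Require Import Reals List.
From Coquelicot Require Import Coquelicot.
Import ListNotations.

Local Notation CC := Complex.C.
Local Open Scope R_scope.

Fixpoint csum (n : nat) (g : nat -> CC) : CC :=
  match n with
  | O => RtoC 0
  | S m => Cplus (csum m g) (g m)
  end.

(* Points of C^d are represented by  z : nat -> C  with  z i = 0  for  i >= d. *)
Definition inner (d : nat) (z w : nat -> CC) : CC :=
  csum d (fun i => Cmult (z i) (Cconj (w i))).

Definition vnorm (d : nat) (z : nat -> CC) : R := sqrt (Re (inner d z z)).

Definition in_Cd (d : nat) (z : nat -> CC) : Prop :=
  forall i, (d <= i)%nat -> z i = RtoC 0.

Definition ball_d (d : nat) (z : nat -> CC) : Prop := in_Cd d z /\ vnorm d z < 1.

Definition udisc (z : CC) : Prop := Cmod z < 1.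
Definition cudisc (z : CC) : Prop := Cmod z <= 1.

(* a finite linear combination  sum_p c_p K(., w_p)  is a list of pairs (c_p, w_p) *)
Definition kcomb (X : Type) := list (CC * X).

Definition keval {X : Type} (K : X -> X -> CC) (s : kcomb X) (z : X) : CC :=
  fold_right (fun p acc => Cplus acc (Cmult (fst p) (K z (snd p)))) (RtoC 0) s.

Definition knormsq {X : Type} (K : X -> X -> CC) (s : kcomb X) : R :=
  Re (fold_right (fun p acc =>
        Cplus acc (fold_right (fun q acc' =>
           Cplus acc' (Cmult (Cmult (fst p) (Cconj (fst q))) (K (snd q) (snd p))))
           (RtoC 0) s)) (RtoC 0) s).

Definition kneg {X : Type} (s : kcomb X) : kcomb X :=
  map (fun p => (Copp (fst p), snd p)) s.

(* h belongs to the RKHS H(K) on Dom: it is the pointwise limit on Dom of a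
   sequence of finite combinations of kernel functions (centred in Dom) which is
   Cauchy for the kernel norm (the standard completion construction). *)
Definition in_RKHS {X : Type} (Dom : X -> Prop) (K : X -> X -> CC) (h : X -> CC) : Prop :=
  exists s : nat -> kcomb X,
    (forall n, List.Forall (fun p => Dom (snd p)) (s n)) /\
    (forall eps, 0 < eps -> exists N, forall m n, (N <= m)%nat -> (N <= n)%nat ->
        knormsq K (s m ++ kneg (s n)) < eps) /\
    (forall z, Dom z -> forall eps, 0 < eps -> exists N, forall n, (N <= n)%nat ->
        Cmod (Cminus (keval K (s n) z) (h z)) < eps).

Definition DA_kernel (d : nat) (z w : nat -> CC) : CC :=
  Cinv (Cminus (RtoC 1) (inner d z w)).

Definition in_H2d (d : nat) (g : (nat -> CC) -> CC) : Prop :=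
  in_RKHS (ball_d d) (DA_kernel d) g.

Definition multiplier (d : nat) (phi : (nat -> CC) -> CC) : Prop :=
  forall g, in_H2d d g -> in_H2d d (fun z => Cmult (phi z) (g z)).

Definition is_variety (d : nat) (V : (nat -> CC) -> Prop) : Prop :=
  exists S : ((nat -> CC) -> CC) -> Prop,
    (forall phi, S phi -> multiplier d phi) /\
    (forall z, V z <-> (ball_d d z /\ forall phi, S phi -> phi z = RtoC 0)).

Definition cont_on_cdisc (g : CC -> CC) : Prop :=
  forall z, cudisc z -> forall eps, 0 < eps -> exists delta, 0 < delta /\
    forall w, cudisc w -> Cmod (Cminus w z) < delta -> Cmod (Cminus (g w) (g z)) < eps.

Definition is_pdx (g : CC -> CC) (z l : CC) : Prop :=
  is_derive (fun t : R => g (Cplus z (RtoC t))) 0 l.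
Definition is_pdy (g : CC -> CC) (z l : CC) : Prop :=
  is_derive (fun t : R => g (Cplus z (Cmult (RtoC t) Ci))) 0 l.

Definition C2_on_cdisc (g : CC -> CC) : Prop :=
  exists gx gy gxx gxy gyx gyy : CC -> CC,
    (forall z, udisc z ->
       is_pdx g z (gx z) /\ is_pdy g z (gy z) /\
       is_pdx gx z (gxx z) /\ is_pdy gx z (gxy z) /\
       is_pdx gy z (gyx z) /\ is_pdy gy z (gyy z)) /\
    cont_on_cdisc g /\ cont_on_cdisc gx /\ cont_on_cdisc gy /\
    cont_on_cdisc gxx /\ cont_on_cdisc gxy /\ cont_on_cdisc gyx /\ cont_on_cdisc gyy.

(* V is an analytic udisc attached to the unit sphere, with embedding map f
   (f is given on all of C; its values on the closed udisc are the C^2 extension). *)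
Definition analytic_disc_attached (d : nat) (V : (nat -> CC) -> Prop)
    (f : CC -> nat -> CC) : Prop :=
  is_variety d V /\
  (forall x, in_Cd d (f x)) /\
  (forall x, udisc x -> ball_d d (f x)) /\
  (forall x y, udisc x -> udisc y -> f x = f y -> x = y) /\
  (forall x i, udisc x -> ex_derive (fun y : CC => f y i) x) /\
  (forall x, udisc x -> exists i, (i < d)%nat /\ C_derive (fun y => f y i) x <> RtoC 0) /\
  (forall z, V z <-> exists x, udisc x /\ z = f x) /\
  (forall i, (i < d)%nat -> C2_on_cdisc (fun x => f x i)) /\
  (forall x, cudisc x -> (vnorm d (f x) = 1 <-> Cmod x = 1)).

Definition kf (d : nat) (f : CC -> nat -> CC) (z w : CC) : CC :=
  Cinv (Cminus (RtoC 1) (inner d (f z) (f w))).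

Definition in_Hf (d : nat) (f : CC -> nat -> CC) (h : CC -> CC) : Prop :=
  in_RKHS udisc (kf d f) h.

(* Let [p] be the common value [f xi = f zeta], a unit vector, and
   [N z = <f z, p>].  Then [Re N <= 1] on the closed disc with equality at [xi]
   and [zeta], and [N] is holomorphic and C^2 up to the boundary, so the Hopf
   lemma gives [Re (xi N'(xi)) > 0], and likewise at [zeta].  Moving inwards by
   [s] from [xi] and [zeta] in suitable directions gives points [z], [w] with
   [1 - <f a, f b> = s + O(s^2)] for all [a, b] in [{z, w}], so the difference
   [k_z - k_w] of kernel functions stays bounded in [H_f] as [s -> 0].  Since
   kernel functions extend continuously to the closed disc and agree at glued
   points, [k_z - k_w] becomes orthogonal to any fixed finite combination of
   kernel functions, while [h z - h w] tends to [c = h xi - h zeta].  Summing [n]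
   such differences gives elements of norm [O(sqrt n)] on which [h] takes values
   of size at least [n |c| / 2], hence [c = 0]. *)

From Stdlib Require Import Reals Lra Lia Psatz List Classical ClassicalEpsilon.
From Coquelicot Require Import Coquelicot.
Import ListNotations.
Local Notation CC := Complex.C.
Local Open Scope R_scope.

Lemma C_eq_Re_Im (a b : CC) : Re a = Re b -> Im a = Im b -> a = b.
Proof. destruct a, b. simpl. intros; subst; auto. Qed.

Ltac cext := apply C_eq_Re_Im; simpl; unfold Re, Im; simpl; ring.

Lemma Rabs_Im_le_Cmod (z : CC) : Rabs (Im z) <= Cmod z.
Proof.
  unfold Cmod. rewrite <- sqrt_Rsqr_abs. apply sqrt_le_1_alt. unfold Rsqr.
  destruct z as [x y]. simpl. nra.
Qed.

Lemma Cmod_le_Rabs_Re_Im (z : CC) : Cmod z <= Rabs (Re z) + Rabs (Im z).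
Proof.
  unfold Cmod. destruct z as [x y]. simpl.
  pose proof (Rabs_pos x); pose proof (Rabs_pos y).
  rewrite <- (sqrt_Rsqr (Rabs x + Rabs y)) by lra.
  apply sqrt_le_1_alt. unfold Rsqr.
  assert (x * x = Rabs x * Rabs x) by (rewrite <- Rabs_mult, Rabs_right; nra).
  assert (y * y = Rabs y * Rabs y) by (rewrite <- Rabs_mult, Rabs_right; nra).
  nra.
Qed.

Lemma Cmod_RtoC_mult (r : R) (z : CC) : Cmod (Cmult (RtoC r) z) = Rabs r * Cmod z.
Proof. rewrite Cmod_mult, Cmod_R. reflexivity. Qed.

Lemma Cmod_reverse_triangle (z w : CC) : Cmod z - Cmod w <= Cmod (Cminus z w).
Proof.
  assert (Cmod z <= Cmod (Cminus z w) + Cmod w)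
    by (replace z with (Cplus (Cminus z w) w) at 1 by ring; apply Cmod_triangle).
  lra.
Qed.

Lemma Rabs_Cmod_minus_le (z w : CC) : Rabs (Cmod z - Cmod w) <= Cmod (Cminus z w).
Proof.
  apply Rabs_le. split.
  - rewrite <- Cmod_opp. replace (Copp (Cminus z w)) with (Cminus w z) by ring.
    pose proof (Cmod_reverse_triangle w z). lra.
  - apply Cmod_reverse_triangle.
Qed.

Lemma Re_Cminus (a b : CC) : Re (Cminus a b) = Re a - Re b.
Proof. destruct a, b. unfold Re; simpl. ring. Qed.

Lemma is_derive_eps_delta {K : AbsRing} {V : NormedModule K} (f : K -> V) x l :
  is_derive f x l <-> forall eps : posreal, exists delta : posreal, forall y,
    norm (minus y x) < delta ->
    norm (minus (minus (f y) (f x)) (scal (minus y x) l)) <= eps * norm (minus y x).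
Proof.
  split.
  - intros [_ H] eps. destruct (H x (fun P HP => HP) eps) as [e He].
    exists e. intros y Hy. apply He. apply (norm_compat1 (V := AbsRing_NormedModule K)). exact Hy.
  - intros H. split; [apply is_linear_scal_l|]. intros x' Hx'.
    apply (is_filter_lim_locally_unique (V := AbsRing_NormedModule K)) in Hx'. subst x'.
    intros eps. destruct (H eps) as [dl Hd].
    set (nf := norm_factor (V := AbsRing_NormedModule K)).
    assert (Hnf : 0 < nf) by apply norm_factor_gt_0.
    assert (Hp : 0 < dl / nf) by (apply Rdiv_lt_0_compat; [apply cond_pos | exact Hnf]).
    exists (mkposreal _ Hp). intros y Hy. apply Hd.
    apply (norm_compat2 (V := AbsRing_NormedModule K)) in Hy. simpl in Hy.
    replace (pos dl) with (nf * (dl / nf)) by (field; lra). exact Hy.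
Qed.

Lemma C_R_norm_Cmod (z : CC) : @norm R_AbsRing C_R_NormedModule z = Cmod z.
Proof.
  unfold norm; simpl. unfold prod_norm; simpl. unfold Cmod. f_equal.
  unfold norm; simpl. unfold abs; simpl. rewrite !Rmult_1_r.
  rewrite <- !Rabs_mult. rewrite !Rabs_right; nra.
Qed.

Lemma is_derive_RC_eps (F : R -> CC) t l : is_derive F t l <->
  forall eps, 0 < eps -> exists delta, 0 < delta /\ forall y, Rabs (y - t) < delta ->
    Cmod (Cminus (Cminus (F y) (F t)) (Cmult (RtoC (y - t)) l)) <= eps * Rabs (y - t).
Proof.
  rewrite is_derive_eps_delta. split.
  - intros H eps He. destruct (H (mkposreal _ He)) as [dl Hd].
    exists dl. split; [apply cond_pos|]. intros y Hy.
    specialize (Hd y Hy). rewrite C_R_norm_Cmod, scal_R_Cmult in Hd. exact Hd.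
  - intros H eps. destruct (H eps (cond_pos eps)) as [dl [Hdl Hd]].
    exists (mkposreal _ Hdl). intros y Hy. rewrite C_R_norm_Cmod, scal_R_Cmult. exact (Hd y Hy).
Qed.

Lemma is_derive_CC_eps (g : CC -> CC) z l : is_derive g z l <->
  forall eps, 0 < eps -> exists delta, 0 < delta /\ forall y, Cmod (Cminus y z) < delta ->
    Cmod (Cminus (Cminus (g y) (g z)) (Cmult (Cminus y z) l)) <= eps * Cmod (Cminus y z).
Proof.
  rewrite is_derive_eps_delta. split.
  - intros H eps He. destruct (H (mkposreal _ He)) as [dl Hd].
    exists dl. split; [apply cond_pos | exact Hd].
  - intros H eps. destruct (H eps (cond_pos eps)) as [dl [Hdl Hd]].
    exists (mkposreal _ Hdl). exact Hd.
Qed.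

Lemma is_derive_RR_eps (F : R -> R) t l : is_derive F t l <->
  forall eps, 0 < eps -> exists delta, 0 < delta /\ forall y, Rabs (y - t) < delta ->
    Rabs (F y - F t - (y - t) * l) <= eps * Rabs (y - t).
Proof.
  rewrite is_derive_eps_delta. split.
  - intros H eps He. destruct (H (mkposreal _ He)) as [dl Hd].
    exists dl. split; [apply cond_pos | exact Hd].
  - intros H eps. destruct (H eps (cond_pos eps)) as [dl [Hdl Hd]].
    exists (mkposreal _ Hdl). exact Hd.
Qed.

Lemma is_derive_RC_Re (F : R -> CC) t l :
  is_derive F t l -> is_derive (fun s => Re (F s)) t (Re l).
Proof.
  rewrite is_derive_RC_eps, is_derive_RR_eps. intros H eps He.
  destruct (H eps He) as [d [Hd H']]. exists d. split; [exact Hd|]. intros y Hy.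
  eapply Rle_trans; [|apply H'; exact Hy]. eapply Rle_trans; [|apply re_le_Cmod].
  right. f_equal. destruct (F y), (F t), l. simpl. ring.
Qed.

Lemma is_derive_RC_Im (F : R -> CC) t l :
  is_derive F t l -> is_derive (fun s => Im (F s)) t (Im l).
Proof.
  rewrite is_derive_RC_eps, is_derive_RR_eps. intros H eps He.
  destruct (H eps He) as [d [Hd H']]. exists d. split; [exact Hd|]. intros y Hy.
  eapply Rle_trans; [|apply H'; exact Hy]. eapply Rle_trans; [|apply Rabs_Im_le_Cmod].
  right. f_equal. destruct (F y), (F t), l. simpl. ring.
Qed.

Lemma is_derive_RC_unique (F : R -> CC) t l1 l2 :
  is_derive F t l1 -> is_derive F t l2 -> l1 = l2.
Proof.
  intros H1 H2. apply C_eq_Re_Im.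
  - apply is_derive_RC_Re, is_derive_unique in H1. apply is_derive_RC_Re, is_derive_unique in H2. congruence.
  - apply is_derive_RC_Im, is_derive_unique in H1. apply is_derive_RC_Im, is_derive_unique in H2. congruence.
Qed.

Lemma is_derive_RC_Cmult_l (F : R -> CC) c t l :
  is_derive F t l -> is_derive (fun s => Cmult c (F s)) t (Cmult c l).
Proof.
  rewrite !is_derive_RC_eps. intros H eps He.
  pose proof (Cmod_ge_0 c).
  destruct (H (eps / (Cmod c + 1))) as [d [Hd H']]; [apply Rdiv_lt_0_compat; lra|].
  exists d. split; [exact Hd|]. intros y Hy. specialize (H' y Hy).
  replace (Cminus (Cminus (Cmult c (F y)) (Cmult c (F t))) (Cmult (RtoC (y - t)) (Cmult c l)))
    with (Cmult c (Cminus (Cminus (F y) (F t)) (Cmult (RtoC (y - t)) l))) by ring.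
  rewrite Cmod_mult. pose proof (Rabs_pos (y - t)).
  assert (Cmod c * (eps / (Cmod c + 1)) <= eps).
  { apply Rmult_le_reg_r with (Cmod c + 1); [lra|].
    unfold Rdiv. rewrite Rmult_assoc, Rmult_assoc, Rinv_l by lra. nra. }
  eapply Rle_trans; [apply Rmult_le_compat_l; [lra | exact H']|]. nra.
Qed.

Lemma is_derive_RC_const (c : CC) t : is_derive (fun _ : R => c) t (RtoC 0).
Proof.
  rewrite is_derive_RC_eps. intros eps He. exists 1. split; [lra|]. intros y _.
  replace (Cminus (Cminus c c) (Cmult (RtoC (y - t)) (RtoC 0))) with (RtoC 0) by ring.
  rewrite Cmod_0. pose proof (Rabs_pos (y - t)). nra.
Qed.

Lemma is_derive_CC_const (c : CC) t : is_derive (fun _ : CC => c) t (RtoC 0).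
Proof.
  rewrite is_derive_CC_eps. intros eps He. exists 1. split; [lra|]. intros y _.
  replace (Cminus (Cminus c c) (Cmult (Cminus y t) (RtoC 0))) with (RtoC 0) by ring.
  rewrite Cmod_0. pose proof (Cmod_ge_0 (Cminus y t)). nra.
Qed.

Lemma continuity_pt_eps (f : R -> R) x0 :
  (forall eps, 0 < eps -> exists delta, 0 < delta /\
     forall x, Rabs (x - x0) < delta -> Rabs (f x - f x0) < eps) ->
  continuity_pt f x0.
Proof.
  intros H eps He. destruct (H eps He) as [d [Hd Hd']].
  exists d. split; [lra|]. intros x [_ Hx]. apply Hd'. exact Hx.
Qed.

(** * Mean value inequalities *)

Definition cont_on_segment (phi : R -> CC) (a b : R) : Prop :=
  forall s, a <= s <= b -> forall eps, 0 < eps -> exists delta, 0 < delta /\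
    forall t, a <= t <= b -> Rabs (t - s) < delta -> Cmod (Cminus (phi t) (phi s)) < eps.

Definition clamp (a b t : R) : R := Rmax a (Rmin b t).

Lemma clamp_in a b t : a <= b -> a <= clamp a b t <= b.
Proof. intros. unfold clamp, Rmax, Rmin. repeat destruct Rle_dec; lra. Qed.

Lemma clamp_id a b t : a <= t <= b -> clamp a b t = t.
Proof. intros. unfold clamp, Rmax, Rmin. repeat destruct Rle_dec; lra. Qed.

Lemma clamp_lipschitz a b t s : a <= b -> Rabs (clamp a b t - clamp a b s) <= Rabs (t - s).
Proof.
  intros. unfold clamp, Rmax, Rmin.
  repeat destruct Rle_dec; unfold Rabs; repeat destruct Rcase_abs; lra.
Qed.

(* The derivative is only assumed on the open interval: [g] is extended by
   [clamp] to a function on R to which [MVT_gen] applies. *)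
Lemma MVT_bound_R (g g' : R -> R) a b M : a < b ->
  (forall s, a < s < b -> is_derive g s (g' s)) ->
  (forall s, a <= s <= b -> forall eps, 0 < eps -> exists delta, 0 < delta /\
    forall t, a <= t <= b -> Rabs (t - s) < delta -> Rabs (g t - g s) < eps) ->
  (forall s, a < s < b -> Rabs (g' s) <= M) ->
  Rabs (g b - g a) <= M * (b - a).
Proof.
  intros Hab Hd Hc HM.
  set (G := fun t => g (clamp a b t)).
  set (dG := fun t => if Rlt_dec a t then if Rlt_dec t b then g' t else 0 else 0).
  assert (HM0 : 0 <= M).
  { pose proof (HM ((a + b) / 2) ltac:(lra)). pose proof (Rabs_pos (g' ((a + b) / 2))). lra. }
  destruct (MVT_gen G a b dG) as [c [Hc1 Hc2]].
  - rewrite Rmin_left, Rmax_right by lra. intros x Hx. unfold dG.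
    destruct (Rlt_dec a x); [|lra]. destruct (Rlt_dec x b); [|lra].
    apply is_derive_ext_loc with g; [|apply Hd; lra].
    assert (Hp : 0 < Rmin (x - a) (b - x)) by (apply Rmin_pos; lra).
    exists (mkposreal _ Hp). intros y Hy. unfold G. rewrite clamp_id; [reflexivity|].
    change (Rabs (y - x) < Rmin (x - a) (b - x)) in Hy.
    pose proof (Rmin_l (x - a) (b - x)); pose proof (Rmin_r (x - a) (b - x)).
    unfold Rabs in Hy; destruct Rcase_abs in Hy; lra.
  - rewrite Rmin_left, Rmax_right by lra. intros x Hx. apply continuity_pt_eps. intros eps He.
    destruct (Hc (clamp a b x) (clamp_in a b x ltac:(lra)) eps He) as [d [Hd0 Hd1]].
    exists d. split; [exact Hd0|]. intros y Hy. apply Hd1; [apply clamp_in; lra|].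
    eapply Rle_lt_trans; [apply clamp_lipschitz; lra | exact Hy].
  - rewrite Rmin_left, Rmax_right in Hc1 by lra.
    unfold G in Hc2. rewrite !clamp_id in Hc2 by lra. rewrite Hc2, Rabs_mult, (Rabs_right (b - a)) by lra.
    apply Rmult_le_compat_r; [lra|]. unfold dG.
    destruct (Rlt_dec a c); [|rewrite Rabs_R0; lra]. destruct (Rlt_dec c b); [|rewrite Rabs_R0; lra].
    apply HM. lra.
Qed.

Lemma MVT_bound_C0 (phi phi' : R -> CC) a b M : a < b ->
  (forall s, a < s < b -> is_derive phi s (phi' s)) ->
  cont_on_segment phi a b ->
  (forall s, a < s < b -> Cmod (phi' s) <= M) ->
  Cmod (Cminus (phi b) (phi a)) <= 2 * M * (b - a).
Proof.
  intros Hab Hd Hc HM.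
  assert (HRe : Rabs (Re (phi b) - Re (phi a)) <= M * (b - a)).
  { apply (MVT_bound_R (fun t => Re (phi t)) (fun t => Re (phi' t))); [exact Hab | | |].
    - intros s Hs. apply is_derive_RC_Re, Hd, Hs.
    - intros s Hs eps He. destruct (Hc s Hs eps He) as [d [Hd0 Hd1]].
      exists d. split; [exact Hd0|]. intros t Ht Hts. rewrite <- Re_Cminus.
      eapply Rle_lt_trans; [apply re_le_Cmod | exact (Hd1 t Ht Hts)].
    - intros s Hs. eapply Rle_trans; [apply re_le_Cmod | exact (HM s Hs)]. }
  assert (HIm : Rabs (Im (phi b) - Im (phi a)) <= M * (b - a)).
  { apply (MVT_bound_R (fun t => Im (phi t)) (fun t => Im (phi' t))); [exact Hab | | |].
    - intros s Hs. apply is_derive_RC_Im, Hd, Hs.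
    - intros s Hs eps He. destruct (Hc s Hs eps He) as [d [Hd0 Hd1]].
      exists d. split; [exact Hd0|]. intros t Ht Hts.
      replace (Im (phi t) - Im (phi s)) with (Im (Cminus (phi t) (phi s)))
        by (destruct (phi t), (phi s); simpl; ring).
      eapply Rle_lt_trans; [apply Rabs_Im_le_Cmod | exact (Hd1 t Ht Hts)].
    - intros s Hs. eapply Rle_trans; [apply Rabs_Im_le_Cmod | exact (HM s Hs)]. }
  eapply Rle_trans; [apply Cmod_le_Rabs_Re_Im|].
  replace (Re (Cminus (phi b) (phi a))) with (Re (phi b) - Re (phi a)) by apply Re_Cminus.
  replace (Im (Cminus (phi b) (phi a))) with (Im (phi b) - Im (phi a))
    by (destruct (phi b), (phi a); simpl; ring).
  lra.
Qed.

Lemma cont_on_segment_sub_linear (phi : R -> CC) L a b :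
  cont_on_segment phi a b -> cont_on_segment (fun t => Cminus (phi t) (Cmult (RtoC t) L)) a b.
Proof.
  intros Hc s Hs eps He. pose proof (Cmod_ge_0 L).
  destruct (Hc s Hs (eps / 2) ltac:(lra)) as [d [Hd Hd']].
  exists (Rmin d (eps / 2 / (Cmod L + 1))).
  split; [apply Rmin_pos; [lra | apply Rdiv_lt_0_compat; lra]|].
  intros t Ht Hts.
  pose proof (Rmin_l d (eps / 2 / (Cmod L + 1))). pose proof (Rmin_r d (eps / 2 / (Cmod L + 1))).
  replace (Cminus (Cminus (phi t) (Cmult (RtoC t) L)) (Cminus (phi s) (Cmult (RtoC s) L)))
    with (Cminus (Cminus (phi t) (phi s)) (Cmult (RtoC (t - s)) L)) by (rewrite RtoC_minus; ring).
  unfold Cminus at 1. eapply Rle_lt_trans; [apply Cmod_triangle|].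
  rewrite Cmod_opp, Cmod_RtoC_mult.
  assert (Rabs (t - s) * (Cmod L + 1) <= eps / 2).
  { apply Rmult_le_reg_r with (/ (Cmod L + 1)); [apply Rinv_0_lt_compat; lra|].
    rewrite Rmult_assoc, Rinv_r by lra. lra. }
  pose proof (Hd' t Ht ltac:(lra)). pose proof (Rabs_pos (t - s)). nra.
Qed.

Lemma MVT_bound_C (phi phi' : R -> CC) a b L M : a < b ->
  (forall s, a < s < b -> is_derive phi s (phi' s)) ->
  cont_on_segment phi a b ->
  (forall s, a < s < b -> Cmod (Cminus (phi' s) L) <= M) ->
  Cmod (Cminus (Cminus (phi b) (phi a)) (Cmult (RtoC (b - a)) L)) <= 2 * M * (b - a).
Proof.
  intros Hab Hd Hc HM.
  replace (Cminus (Cminus (phi b) (phi a)) (Cmult (RtoC (b - a)) L))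
    with (Cminus (Cminus (phi b) (Cmult (RtoC b) L)) (Cminus (phi a) (Cmult (RtoC a) L)))
    by (rewrite RtoC_minus; ring).
  apply (MVT_bound_C0 (fun t => Cminus (phi t) (Cmult (RtoC t) L)) (fun s => Cminus (phi' s) L));
    [exact Hab | | | exact HM].
  - intros s Hs. apply (is_derive_minus phi (fun t => Cmult (RtoC t) L)); [apply Hd, Hs|].
    rewrite is_derive_RC_eps. intros eps He. exists 1. split; [lra|]. intros y _.
    replace (Cminus (Cminus (Cmult (RtoC y) L) (Cmult (RtoC s) L)) (Cmult (RtoC (y - s)) L))
      with (RtoC 0) by (rewrite RtoC_minus; ring).
    rewrite Cmod_0. pose proof (Rabs_pos (y - s)). nra.
  - apply cont_on_segment_sub_linear, Hc.
Qed.

Lemma is_derive_cont_on_segment (phi phi' : R -> CC) a b :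
  (forall s, a <= s <= b -> is_derive phi s (phi' s)) -> cont_on_segment phi a b.
Proof.
  intros H s Hs eps He. specialize (H s Hs). rewrite is_derive_RC_eps in H.
  destruct (H 1 ltac:(lra)) as [d [Hd H']]. pose proof (Cmod_ge_0 (phi' s)).
  exists (Rmin d (eps / (Cmod (phi' s) + 2))).
  split; [apply Rmin_pos; [lra | apply Rdiv_lt_0_compat; lra]|].
  intros t Ht Hts.
  pose proof (Rmin_l d (eps / (Cmod (phi' s) + 2))). pose proof (Rmin_r d (eps / (Cmod (phi' s) + 2))).
  specialize (H' t ltac:(lra)).
  replace (Cminus (phi t) (phi s)) with (Cplus (Cminus (Cminus (phi t) (phi s))
    (Cmult (RtoC (t - s)) (phi' s))) (Cmult (RtoC (t - s)) (phi' s))) by ring.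
  eapply Rle_lt_trans; [apply Cmod_triangle|]. rewrite Cmod_RtoC_mult.
  pose proof (Rabs_pos (t - s)).
  assert (Rabs (t - s) * (Cmod (phi' s) + 2) < eps).
  { apply Rmult_lt_reg_r with (/ (Cmod (phi' s) + 2)); [apply Rinv_0_lt_compat; lra|].
    rewrite Rmult_assoc, Rinv_r by lra. lra. }
  nra.
Qed.

Lemma MVT_bound_C_between (phi phi' : R -> CC) a b L M :
  (forall s, Rmin a b <= s <= Rmax a b -> is_derive phi s (phi' s)) ->
  (forall s, Rmin a b <= s <= Rmax a b -> Cmod (Cminus (phi' s) L) <= M) ->
  Cmod (Cminus (Cminus (phi b) (phi a)) (Cmult (RtoC (b - a)) L)) <= 2 * M * Rabs (b - a).
Proof.
  intros Hd HM. destruct (Rtotal_order a b) as [Hab | [Hab | Hab]].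
  - rewrite Rmin_left, Rmax_right in * by lra. rewrite Rabs_right by lra.
    apply MVT_bound_C with phi'; [exact Hab | intros; apply Hd; lra | |intros; apply HM; lra].
    apply is_derive_cont_on_segment with phi'. exact Hd.
  - subst b. rewrite Rminus_eq_0, Rabs_R0.
    replace (Cminus (Cminus (phi a) (phi a)) (Cmult (RtoC 0) L)) with (RtoC 0) by ring.
    rewrite Cmod_0. lra.
  - rewrite Rmin_right, Rmax_left in * by lra. rewrite Rabs_left by lra.
    pose proof (MVT_bound_C phi phi' b a L M Hab ltac:(intros; apply Hd; lra)
      (is_derive_cont_on_segment phi phi' b a Hd) ltac:(intros; apply HM; lra)) as H.
    replace (Cminus (Cminus (phi b) (phi a)) (Cmult (RtoC (b - a)) L))
      with (Copp (Cminus (Cminus (phi a) (phi b)) (Cmult (RtoC (a - b)) L)))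
      by (rewrite !RtoC_minus; ring).
    rewrite Cmod_opp. lra.
Qed.

Lemma is_derive_along_line (g : CC -> CC) u D t l :
  is_derive g (Cplus u (Cmult (RtoC t) D)) l ->
  is_derive (fun s : R => g (Cplus u (Cmult (RtoC s) D))) t (Cmult D l).
Proof.
  rewrite is_derive_CC_eps, is_derive_RC_eps. intros H eps He.
  pose proof (Cmod_ge_0 D).
  destruct (H (eps / (Cmod D + 1))) as [d [Hd H']]; [apply Rdiv_lt_0_compat; lra|].
  exists (d / (Cmod D + 1)). split; [apply Rdiv_lt_0_compat; lra|]. intros y Hy.
  assert (E : Cminus (Cplus u (Cmult (RtoC y) D)) (Cplus u (Cmult (RtoC t) D))
              = Cmult (RtoC (y - t)) D) by (rewrite RtoC_minus; ring).
  pose proof (Rabs_pos (y - t)).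
  assert (Hyt : Rabs (y - t) * (Cmod D + 1) < d).
  { apply Rmult_lt_reg_r with (/ (Cmod D + 1)); [apply Rinv_0_lt_compat; lra|].
    rewrite Rmult_assoc, Rinv_r by lra. lra. }
  specialize (H' (Cplus u (Cmult (RtoC y) D))). rewrite E, Cmod_RtoC_mult in H'.
  specialize (H' ltac:(nra)).
  replace (Cmult (Cmult (RtoC (y - t)) D) l) with (Cmult (RtoC (y - t)) (Cmult D l)) in H' by ring.
  eapply Rle_trans; [exact H'|].
  assert (/ (Cmod D + 1) * Cmod D <= 1).
  { apply Rmult_le_reg_l with (Cmod D + 1); [lra|]. rewrite <- Rmult_assoc, Rinv_r by lra. lra. }
  assert (0 < / (Cmod D + 1)) by (apply Rinv_0_lt_compat; lra).
  unfold Rdiv. replace (eps * / (Cmod D + 1) * (Rabs (y - t) * Cmod D))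
    with (eps * Rabs (y - t) * (/ (Cmod D + 1) * Cmod D)) by ring.
  assert (0 <= eps * Rabs (y - t)) by nra. nra.
Qed.

Lemma is_derive_line_shift (G : CC -> CC) c D s0 l :
  is_derive (fun t : R => G (Cplus (Cplus c (Cmult (RtoC s0) D)) (Cmult (RtoC t) D))) 0 l ->
  is_derive (fun s : R => G (Cplus c (Cmult (RtoC s) D))) s0 l.
Proof.
  rewrite !is_derive_RC_eps. intros H eps He. destruct (H eps He) as [d [Hd H']].
  exists d. split; [exact Hd|]. intros y Hy.
  specialize (H' (y - s0)). rewrite Rminus_0_r in H'. specialize (H' Hy).
  replace (Cplus (Cplus c (Cmult (RtoC s0) D)) (Cmult (RtoC (y - s0)) D))
    with (Cplus c (Cmult (RtoC y) D)) in H' by (rewrite RtoC_minus; ring).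
  replace (Cplus (Cplus c (Cmult (RtoC s0) D)) (Cmult (RtoC 0) D))
    with (Cplus c (Cmult (RtoC s0) D)) in H' by ring.
  exact H'.
Qed.

Lemma is_pdx_horizontal (G : CC -> CC) c s0 l :
  is_pdx G (Cplus c (RtoC s0)) l -> is_derive (fun s : R => G (Cplus c (RtoC s))) s0 l.
Proof.
  unfold is_pdx. intros H.
  apply (is_derive_ext (fun s : R => G (Cplus c (Cmult (RtoC s) (RtoC 1))))).
  { intros t. rewrite Cmult_1_r. reflexivity. }
  apply is_derive_line_shift. eapply is_derive_ext; [|exact H].
  intros t. simpl. rewrite !Cmult_1_r. reflexivity.
Qed.

Lemma is_pdy_vertical (G : CC -> CC) c s0 l :
  is_pdy G (Cplus c (Cmult (RtoC s0) Ci)) l ->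
  is_derive (fun s : R => G (Cplus c (Cmult (RtoC s) Ci))) s0 l.
Proof. apply is_derive_line_shift. Qed.

Lemma is_derive_pdx_pdy (g : CC -> CC) (u l : CC) :
  is_derive g u l -> is_pdx g u l /\ is_pdy g u (Cmult Ci l).
Proof.
  intros H. split.
  - unfold is_pdx. apply (is_derive_ext (fun s : R => g (Cplus u (Cmult (RtoC s) (RtoC 1))))).
    { intros t. rewrite Cmult_1_r. reflexivity. }
    rewrite <- (Cmult_1_l l) at 1. apply is_derive_along_line.
    replace (Cplus u (Cmult (RtoC 0) (RtoC 1))) with u by ring. exact H.
  - unfold is_pdy. apply is_derive_along_line.
    replace (Cplus u (Cmult (RtoC 0) Ci)) with u by ring. exact H.
Qed.

Definition shift_xy (u : CC) (s t : R) : CC := Cplus u (Cplus (RtoC s) (Cmult (RtoC t) Ci)).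

Lemma shift_xy_dist u s t : Cmod (Cminus (shift_xy u s t) u) <= Rabs s + Rabs t.
Proof.
  eapply Rle_trans; [apply Cmod_le_Rabs_Re_Im|].
  replace (Re (Cminus (shift_xy u s t) u)) with s by (unfold shift_xy, Re; simpl; ring).
  replace (Im (Cminus (shift_xy u s t) u)) with t by (unfold shift_xy, Im; simpl; ring). lra.
Qed.

Lemma is_derive_shift_x (G : CC -> CC) l u t s0 :
  is_pdx G (shift_xy u s0 t) l -> is_derive (fun s => G (shift_xy u s t)) s0 l.
Proof.
  intros H. apply (is_derive_ext (fun s => G (Cplus (Cplus u (Cmult (RtoC t) Ci)) (RtoC s)))).
  { intros s. f_equal. unfold shift_xy. cext. }
  apply is_pdx_horizontal.
  replace (Cplus (Cplus u (Cmult (RtoC t) Ci)) (RtoC s0)) with (shift_xy u s0 t)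
    by (unfold shift_xy; cext).
  exact H.
Qed.

Lemma is_derive_shift_y (G : CC -> CC) l u s t0 :
  is_pdy G (shift_xy u s t0) l -> is_derive (fun t => G (shift_xy u s t)) t0 l.
Proof.
  intros H. apply (is_derive_ext (fun t => G (Cplus (Cplus u (RtoC s)) (Cmult (RtoC t) Ci)))).
  { intros t. f_equal. unfold shift_xy. cext. }
  apply is_pdy_vertical.
  replace (Cplus (Cplus u (RtoC s)) (Cmult (RtoC t0) Ci)) with (shift_xy u s t0)
    by (unfold shift_xy; cext).
  exact H.
Qed.

Lemma udisc_near u : udisc u -> forall w, Cmod (Cminus w u) < 1 - Cmod u -> udisc w.
Proof.
  unfold udisc. intros Hu w Hw. replace w with (Cplus u (Cminus w u)) by ring.
  eapply Rle_lt_trans; [apply Cmod_triangle | lra].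
Qed.

Lemma udisc_cudisc u : udisc u -> cudisc u.
Proof. unfold udisc, cudisc. lra. Qed.

Lemma cont_on_cdisc_interior (g : CC -> CC) u : cont_on_cdisc g -> udisc u ->
  forall eps, 0 < eps -> exists delta, 0 < delta /\
    forall w, Cmod (Cminus w u) < delta -> Cmod (Cminus (g w) (g u)) < eps.
Proof.
  intros Hg Hu eps He. destruct (Hg u (udisc_cudisc u Hu) eps He) as [d [Hd H]].
  exists (Rmin d (1 - Cmod u)). split; [apply Rmin_pos; unfold udisc in Hu; lra|].
  intros w Hw. pose proof (Rmin_l d (1 - Cmod u)). pose proof (Rmin_r d (1 - Cmod u)).
  apply H; [|lra]. apply udisc_cudisc, (udisc_near u Hu). lra.
Qed.

Lemma vertical_increment_bound (G B : CC -> CC) u a b e m : udisc u ->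
  (forall w, udisc w -> is_pdy G w (B w)) -> m <= 1 - Cmod u ->
  (forall w, Cmod (Cminus w u) < m -> Cmod (Cminus (B w) (B u)) < e) -> Rabs a + Rabs b < m ->
  Cmod (Cminus (Cminus (G (shift_xy u a b)) (G (shift_xy u a 0))) (Cmult (RtoC b) (B u))) <= 2 * e * Rabs b.
Proof.
  intros Hu HB Hm HBc Hab.
  assert (Hnear : forall t, Rmin 0 b <= t <= Rmax 0 b -> Cmod (Cminus (shift_xy u a t) u) < m).
  { intros t Ht. eapply Rle_lt_trans; [apply shift_xy_dist|].
    assert (Rabs t <= Rabs b) by (unfold Rmin, Rmax in Ht; destruct Rle_dec; unfold Rabs; repeat destruct Rcase_abs; lra).
    lra. }
  replace (Cmult (RtoC b) (B u)) with (Cmult (RtoC (b - 0)) (B u)) by (rewrite Rminus_0_r; reflexivity).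
  replace (Rabs b) with (Rabs (b - 0)) by (rewrite Rminus_0_r; reflexivity).
  apply (MVT_bound_C_between (fun t => G (shift_xy u a t)) (fun t => B (shift_xy u a t))).
  - intros t Ht. apply is_derive_shift_y, HB, (udisc_near u Hu). pose proof (Hnear t Ht). lra.
  - intros t Ht. left. apply HBc, Hnear, Ht.
Qed.

(* Along a line through [u], split the increment into a horizontal step (handled
   by the partial derivative [A u]) and a vertical step (handled by the mean
   value inequality, using the continuity of [B] at [u]). *)
Lemma is_derive_direction (G A B : CC -> CC) u D :
  udisc u -> (forall w, udisc w -> is_pdx G w (A w)) -> (forall w, udisc w -> is_pdy G w (B w)) ->
  cont_on_cdisc B ->
  is_derive (fun t : R => G (Cplus u (Cmult (RtoC t) D))) 0
     (Cplus (Cmult (RtoC (Re D)) (A u)) (Cmult (RtoC (Im D)) (B u))).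
Proof.
  intros Hu HA HB HBc. rewrite is_derive_RC_eps. intros eps He.
  pose proof (Cmod_ge_0 D).
  set (e := eps / (3 * (Cmod D + 1))).
  assert (He' : 0 < e) by (unfold e; apply Rdiv_lt_0_compat; lra).
  pose proof (HA u Hu) as HAu. unfold is_pdx in HAu. rewrite is_derive_RC_eps in HAu.
  destruct (HAu e He') as [d1 [Hd1 H1]].
  destruct (cont_on_cdisc_interior B u HBc Hu e He') as [d2 [Hd2 H2]].
  set (r := 1 - Cmod u). assert (Hr : 0 < r) by (unfold r, udisc in *; lra).
  set (m := Rmin d1 (Rmin d2 r)).
  assert (Hm : 0 < m) by (unfold m; repeat apply Rmin_pos; lra).
  assert (Hm1 : m <= d1) by apply Rmin_l.
  assert (Hm2 : m <= d2) by (eapply Rle_trans; [apply Rmin_r | apply Rmin_l]).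
  assert (Hm3 : m <= r) by (eapply Rle_trans; [apply Rmin_r | apply Rmin_r]).
  exists (m / (2 * (Cmod D + 1))). split; [apply Rdiv_lt_0_compat; lra|].
  intros y Hy. rewrite Rminus_0_r in *.
  set (D1 := Re D). set (D2 := Im D).
  assert (HD1 : Rabs D1 <= Cmod D) by apply re_le_Cmod.
  assert (HD2 : Rabs D2 <= Cmod D) by apply Rabs_Im_le_Cmod.
  pose proof (Rabs_pos y).
  assert (Hym : Rabs y * (2 * (Cmod D + 1)) < m).
  { apply Rmult_lt_reg_r with (/ (2 * (Cmod D + 1))); [apply Rinv_0_lt_compat; lra|].
    rewrite Rmult_assoc, Rinv_r by lra. lra. }
  assert (Hy1 : Rabs y * Rabs D1 <= Rabs y * Cmod D) by (apply Rmult_le_compat_l; lra).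
  assert (Hy2 : Rabs y * Rabs D2 <= Rabs y * Cmod D) by (apply Rmult_le_compat_l; lra).
  replace (Cplus u (Cmult (RtoC y) D)) with (shift_xy u (y * D1) (y * D2))
    by (unfold shift_xy, D1, D2; destruct D; cext).
  replace (Cplus u (Cmult (RtoC 0) D)) with u by cext.
  assert (Hvert := vertical_increment_bound G B u (y * D1) (y * D2) e m Hu HB Hm3
                    (fun w Hw => H2 w ltac:(lra)) ltac:(rewrite !Rabs_mult; nra)).
  assert (Hhor : Cmod (Cminus (Cminus (G (Cplus u (RtoC (y * D1)))) (G (Cplus u (RtoC 0))))
                  (Cmult (RtoC (y * D1 - 0)) (A u))) <= e * Rabs (y * D1 - 0)).
  { apply H1. rewrite Rminus_0_r, Rabs_mult. nra. }
  replace (Cplus u (RtoC (y * D1))) with (shift_xy u (y * D1) 0) in Hhor by (unfold shift_xy; cext).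
  replace (Cplus u (RtoC 0)) with u in Hhor by cext.
  rewrite Rminus_0_r, Rabs_mult in Hhor. rewrite Rabs_mult in Hvert.
  set (a := G (shift_xy u (y * D1) (y * D2))) in *. set (b := G (shift_xy u (y * D1) 0)) in *.
  replace (Cminus (Cminus a (G u)) (Cmult (RtoC y) (Cplus (Cmult (RtoC D1) (A u)) (Cmult (RtoC D2) (B u)))))
    with (Cplus (Cminus (Cminus a b) (Cmult (RtoC (y * D2)) (B u)))
                (Cminus (Cminus b (G u)) (Cmult (RtoC (y * D1)) (A u)))) by (rewrite !RtoC_mult; ring).
  eapply Rle_trans; [apply Cmod_triangle|].
  assert (e * (3 * (Cmod D + 1)) = eps) by (unfold e; field; lra).
  assert (0 <= e * Rabs y) by nra.
  nra.
Qed.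

Lemma mixed_difference_bound (F Fs Fst : R -> R -> CC) h L e : 0 < h ->
  (forall s t, 0 <= s <= h -> 0 <= t <= h -> is_derive (fun s => F s t) s (Fs s t)) ->
  (forall s t, 0 <= s <= h -> 0 <= t <= h -> is_derive (fun t => Fs s t) t (Fst s t)) ->
  (forall s t, 0 <= s <= h -> 0 <= t <= h -> Cmod (Cminus (Fst s t) L) <= e) ->
  Cmod (Cminus (Cminus (Cminus (F h h) (F h 0)) (Cminus (F 0 h) (F 0 0)))
               (Cmult (RtoC h) (Cmult (RtoC h) L))) <= 4 * e * (h * h).
Proof.
  intros Hh HFs HFst HL.
  assert (Hin : forall s, Rmin 0 h <= s <= Rmax 0 h -> 0 <= s <= h)
    by (rewrite Rmin_left, Rmax_right by lra; tauto).
  pose proof (MVT_bound_C_between (fun s => Cminus (F s h) (F s 0)) (fun s => Cminus (Fs s h) (Fs s 0))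
                0 h (Cmult (RtoC h) L) (2 * e * h)) as H.
  rewrite Rminus_0_r, Rabs_right in H by lra.
  replace (4 * e * (h * h)) with (2 * (2 * e * h) * h) by ring.
  apply H.
  - intros s Hs. apply (is_derive_minus (fun s => F s h) (fun s => F s 0)); apply HFs; auto; lra.
  - intros s Hs.
    pose proof (MVT_bound_C_between (fun t => Fs s t) (fun t => Fst s t) 0 h L e
                  ltac:(intros t Ht; apply HFst; auto) ltac:(intros t Ht; apply HL; auto)) as Hst.
    rewrite Rminus_0_r, Rabs_right in Hst by lra. exact Hst.
Qed.

(* Clairaut: both mixed second differences of [G] over a small square equal
   [h^2 Gxy u] and [h^2 Gyx u] up to [o(h^2)]. *)
Lemma pdxy_eq_pdyx (G Gx Gy Gxy Gyx : CC -> CC) u : udisc u ->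
  (forall w, udisc w -> is_pdx G w (Gx w)) -> (forall w, udisc w -> is_pdy G w (Gy w)) ->
  (forall w, udisc w -> is_pdy Gx w (Gxy w)) -> (forall w, udisc w -> is_pdx Gy w (Gyx w)) ->
  cont_on_cdisc Gxy -> cont_on_cdisc Gyx -> Gxy u = Gyx u.
Proof.
  intros Hu HGx HGy HGxy HGyx Cxy Cyx.
  apply NNPP. intros NE.
  set (m := Cmod (Cminus (Gxy u) (Gyx u))).
  assert (Hm : 0 < m) by (apply Cmod_gt_0; intro E; apply NE, Ceq_minus, E).
  set (e := m / 10). assert (He : 0 < e) by (unfold e; lra).
  destruct (cont_on_cdisc_interior Gxy u Cxy Hu e He) as [d1 [Hd1 H1]].
  destruct (cont_on_cdisc_interior Gyx u Cyx Hu e He) as [d2 [Hd2 H2]].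
  set (r := 1 - Cmod u). assert (Hr : 0 < r) by (unfold r, udisc in *; lra).
  pose proof (Rmin_l d1 (Rmin d2 r)). pose proof (Rmin_r d1 (Rmin d2 r)).
  pose proof (Rmin_l d2 r). pose proof (Rmin_r d2 r). pose proof (Rmin_pos d1 (Rmin d2 r) Hd1 (Rmin_pos d2 r Hd2 Hr)).
  set (h := Rmin d1 (Rmin d2 r) / 4).
  assert (Hh : 0 < h) by (unfold h; lra).
  assert (Hsq : forall s t, 0 <= s <= h -> 0 <= t <= h -> Cmod (Cminus (shift_xy u s t) u) < 2 * h + h).
  { intros s t Hs Ht. eapply Rle_lt_trans; [apply shift_xy_dist|]. rewrite !Rabs_right by lra. lra. }
  assert (HD : forall s t, 0 <= s <= h -> 0 <= t <= h -> udisc (shift_xy u s t)).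
  { intros s t Hs Ht. apply (udisc_near u Hu). pose proof (Hsq s t Hs Ht). unfold h in *. fold r. lra. }
  assert (QX := mixed_difference_bound (fun s t => G (shift_xy u s t)) (fun s t => Gx (shift_xy u s t))
                  (fun s t => Gxy (shift_xy u s t)) h (Gxy u) e Hh
                  ltac:(intros s t Hs Ht; apply is_derive_shift_x, HGx, HD; auto)
                  ltac:(intros s t Hs Ht; apply is_derive_shift_y, HGxy, HD; auto)
                  ltac:(intros s t Hs Ht; left; apply H1; pose proof (Hsq s t Hs Ht); unfold h in *; lra)).
  assert (QY := mixed_difference_bound (fun t s => G (shift_xy u s t)) (fun t s => Gy (shift_xy u s t))
                  (fun t s => Gyx (shift_xy u s t)) h (Gyx u) e Hh
                  ltac:(intros t s Ht Hs; apply is_derive_shift_y, HGy, HD; auto)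
                  ltac:(intros t s Ht Hs; apply is_derive_shift_x, HGyx, HD; auto)
                  ltac:(intros t s Ht Hs; left; apply H2; pose proof (Hsq s t Hs Ht); unfold h in *; lra)).
  cbv beta in QX, QY.
  set (a := G (shift_xy u h h)) in *. set (b := G (shift_xy u h 0)) in *.
  set (c := G (shift_xy u 0 h)) in *. set (d := G (shift_xy u 0 0)) in *.
  assert (HE : Cmod (Cmult (RtoC (h * h)) (Cminus (Gxy u) (Gyx u))) <= 8 * e * (h * h)).
  { replace (Cmult (RtoC (h * h)) (Cminus (Gxy u) (Gyx u)))
      with (Cminus (Cminus (Cminus (Cminus a c) (Cminus b d)) (Cmult (RtoC h) (Cmult (RtoC h) (Gyx u))))
                   (Cminus (Cminus (Cminus a b) (Cminus c d)) (Cmult (RtoC h) (Cmult (RtoC h) (Gxy u)))))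
      by (rewrite RtoC_mult; ring).
    unfold Cminus at 1. eapply Rle_trans; [apply Cmod_triangle|]. rewrite Cmod_opp. lra. }
  rewrite Cmod_RtoC_mult, Rabs_right in HE by nra. fold m in HE.
  unfold e in HE. assert (0 < h * h) by nra. nra.
Qed.

Lemma local_max_second_derivative_nonpos (phi phi1 : R -> R) r q : 0 < r ->
  (forall t, Rabs t < r -> phi t <= phi 0) ->
  (forall t, Rabs t < r -> is_derive phi t (phi1 t)) ->
  is_derive phi1 0 q -> q <= 0.
Proof.
  intros Hr Hmax Hd Hq. apply Rnot_lt_le. intros Hq0.
  rewrite is_derive_RR_eps in Hq. destruct (Hq (q / 2) ltac:(lra)) as [d [Hd0 Hd']].
  set (t0 := Rmin d r / 2).
  pose proof (Rmin_pos d r Hd0 Hr). pose proof (Rmin_l d r). pose proof (Rmin_r d r).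
  assert (Ht0 : 0 < t0 < d /\ t0 < r) by (unfold t0; lra).
  assert (Hb : forall t, Rabs t < d ->
            - (q / 2) * Rabs t <= phi1 t - phi1 0 - t * q <= (q / 2) * Rabs t).
  { intros t Ht. specialize (Hd' t). rewrite Rminus_0_r in Hd'.
    specialize (Hd' Ht). apply Rabs_le_between in Hd'. lra. }
  destruct (Rle_lt_dec 0 (phi1 0)) as [Hp | Hn].
  - destruct (MVT_cor2 phi phi1 0 t0 ltac:(lra)) as [c [Hc1 Hc2]].
    { intros c Hc. apply is_derive_Reals. apply Hd. rewrite Rabs_right; lra. }
    specialize (Hb c ltac:(rewrite Rabs_right; lra)). rewrite Rabs_right in Hb by lra.
    assert (phi1 c > 0) by nra.
    specialize (Hmax t0 ltac:(rewrite Rabs_right; lra)). nra.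
  - destruct (MVT_cor2 phi phi1 (- t0) 0 ltac:(lra)) as [c [Hc1 Hc2]].
    { intros c Hc. apply is_derive_Reals. apply Hd. rewrite Rabs_left1; lra. }
    specialize (Hb c ltac:(rewrite Rabs_left1; lra)). rewrite Rabs_left1 in Hb by lra.
    assert (phi1 c < 0) by nra.
    specialize (Hmax (- t0) ltac:(rewrite Rabs_left1; lra)). nra.
Qed.

Lemma In_argmax {A : Type} (l : list A) (P : A -> Prop) (F : A -> R) :
  (exists a, In a l /\ P a) -> exists a, In a l /\ P a /\ forall b, In b l -> P b -> F b <= F a.
Proof.
  induction l as [|a0 l IH]; intros [a [Ha HP]]; [destruct Ha|].
  destruct (classic (exists a, In a l /\ P a)) as [Hex|Hnex].
  - destruct (IH Hex) as [a1 [Ha1 [HP1 Hmax]]].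
    destruct (classic (P a0)) as [HP0|HP0]; [destruct (Rle_lt_dec (F a0) (F a1))|].
    + exists a1. split; [right; auto|]. split; [auto|]. intros b [Hb|Hb] HPb; [subst|]; auto.
    + exists a0. split; [left; auto|]. split; [auto|].
      intros b [Hb|Hb] HPb; [subst; lra|]. specialize (Hmax b Hb HPb); lra.
    + exists a1. split; [right; auto|]. split; [auto|].
      intros b [Hb|Hb] HPb; [subst; contradiction | auto].
  - destruct Ha as [Ha|Ha]; [subst a0|exfalso; apply Hnex; eauto].
    exists a. split; [left; auto|]. split; [auto|].
    intros b [Hb|Hb] HPb; [subst; lra | exfalso; apply Hnex; eauto].
Qed.

Definition annulus (r1 r2 : R) (z : CC) : Prop := r1 <= Cmod z <= r2.

Definition rel_continuous_on (A : CC -> Prop) (W : CC -> R) : Prop :=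
  forall z, A z -> forall eps, 0 < eps -> exists delta, 0 < delta /\
    forall w, A w -> Cmod (Cminus w z) < delta -> Rabs (W w - W z) < eps.

Definition toC (x : Compactness.Tn 2 R) : CC := let '(x1, (x2, _)) := x in (x1, x2).
Definition ofC (z : CC) : Compactness.Tn 2 R := (fst z, (snd z, tt)).

Lemma toC_ofC z : toC (ofC z) = z.
Proof. destruct z; reflexivity. Qed.

Lemma close_n_toC d x t : close_n 2 d x t -> Cmod (Cminus (toC x) (toC t)) < 2 * d.
Proof.
  destruct x as [x1 [x2 []]], t as [t1 [t2 []]]. simpl. intros [H1 [H2 _]].
  eapply Rle_lt_trans; [apply Cmod_le_Rabs_Re_Im|]. unfold Re, Im; simpl.
  replace (x1 + - t1) with (x1 - t1) by ring. replace (x2 + - t2) with (x2 - t2) by ring. lra.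
Qed.

Lemma annulus_gauge (W : CC -> R) r1 r2 (better : CC -> CC) :
  rel_continuous_on (annulus r1 r2) W ->
  (forall z, annulus r1 r2 z -> W z < W (better z)) ->
  forall z, exists d : posreal,
    (annulus r1 r2 z -> forall w, annulus r1 r2 w -> Cmod (Cminus w z) < 2 * d -> W w < W (better z)) /\
    (~ annulus r1 r2 z -> forall w, Cmod (Cminus w z) < 2 * d -> ~ annulus r1 r2 w).
Proof.
  intros HW Hb z. destruct (classic (annulus r1 r2 z)) as [Hz|Hz].
  - specialize (Hb z Hz).
    destruct (HW z Hz (W (better z) - W z) ltac:(lra)) as [d [Hd Hd']].
    exists (mkposreal (d / 2) ltac:(lra)). split; [|tauto].
    intros _ w Hw Hwz. simpl in Hwz. specialize (Hd' w Hw ltac:(lra)). apply Rabs_def2 in Hd'. lra.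
  - assert (Hz0 := Hz). unfold annulus in Hz. apply not_and_or in Hz.
    set (g := Rmax (r1 - Cmod z) (Cmod z - r2)).
    assert (Hg : 0 < g).
    { unfold g. pose proof (Rmax_l (r1 - Cmod z) (Cmod z - r2)).
      pose proof (Rmax_r (r1 - Cmod z) (Cmod z - r2)). destruct Hz; lra. }
    exists (mkposreal (g / 2) ltac:(lra)). split; [tauto|].
    intros _ w Hwz Hw. simpl in Hwz. unfold annulus in Hw.
    pose proof (Rabs_Cmod_minus_le w z) as Hwz'. apply Rabs_le_between in Hwz'.
    unfold g, Rmax in Hwz. destruct Rle_dec in Hwz; lra.
Qed.

Lemma annulus_attains_max (W : CC -> R) r1 r2 : 0 < r1 <= r2 ->
  rel_continuous_on (annulus r1 r2) W ->
  exists zs, annulus r1 r2 zs /\ forall z, annulus r1 r2 z -> W z <= W zs.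
Proof.
  intros Hr HW. apply NNPP. intros Hno.
  assert (Hb : forall z, exists z', annulus r1 r2 z -> annulus r1 r2 z' /\ W z < W z').
  { intros z. destruct (classic (annulus r1 r2 z)) as [Hz|Hz]; [|exists z; tauto].
    apply NNPP. intros Hn. apply Hno. exists z. split; [exact Hz|]. intros z' Hz'.
    apply Rnot_lt_le. intros Hlt. apply Hn. exists z'. auto. }
  destruct (choice _ Hb) as [better Hbetter].
  destruct (choice _ (annulus_gauge W r1 r2 better HW (fun z Hz => proj2 (Hbetter z Hz))))
    as [gauge Hgauge].
  set (a := (- r2, (- r2, tt)) : Compactness.Tn 2 R). set (b := (r2, (r2, tt)) : Compactness.Tn 2 R).
  apply (compactness_list 2 a b (fun t => gauge (toC t))). intros [l Hl].
  assert (Hbox : forall z, annulus r1 r2 z -> bounded_n 2 a b (ofC z)).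
  { intros [x y] Hz. unfold annulus in Hz. simpl.
    pose proof (re_le_Cmod (x, y)). pose proof (Rabs_Im_le_Cmod (x, y)).
    assert (Hx : Rabs x <= r2) by (simpl in *; lra). assert (Hy : Rabs y <= r2) by (simpl in *; lra).
    apply Rabs_le_between in Hx. apply Rabs_le_between in Hy. tauto. }
  assert (Hcov : forall z, annulus r1 r2 z -> exists t, In t l /\ annulus r1 r2 (toC t) /\
                   W z < W (better (toC t))).
  { intros z Hz. destruct (Hl (ofC z) (Hbox z Hz)) as [t [Ht [_ Hc]]].
    apply close_n_toC in Hc. rewrite toC_ofC in Hc.
    destruct (Hgauge (toC t)) as [Hin Hout].
    destruct (classic (annulus r1 r2 (toC t))) as [HA|HA].
    - exists t. auto.
    - exfalso. exact (Hout HA z Hc Hz). }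
  assert (Hz0 : annulus r1 r2 (RtoC r1)) by (unfold annulus; rewrite Cmod_R, Rabs_right; lra).
  destruct (Hcov _ Hz0) as [t0 [Ht0 [HA0 _]]].
  destruct (In_argmax l (fun t => annulus r1 r2 (toC t)) (fun t => W (better (toC t))))
    as [ts [Hts [HAs Hmax]]]; [exists t0; auto|].
  destruct (Hbetter _ HAs) as [HAb _].
  destruct (Hcov _ HAb) as [t [Ht [HAt Hlt]]].
  specialize (Hmax t Ht HAt). lra.
Qed.

Fixpoint rsum (n : nat) (a : nat -> R) : R :=
  match n with O => 0 | S m => rsum m a + a m end.

Lemma csum_ext n g g' : (forall i, (i < n)%nat -> g i = g' i) -> csum n g = csum n g'.
Proof.
  induction n as [|n IH]; simpl; intros H; [reflexivity|].
  rewrite IH by (intros; apply H; lia). rewrite H by lia. reflexivity.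
Qed.

Lemma rsum_S n a : rsum (S n) a = rsum n a + a n.
Proof. reflexivity. Qed.

Lemma rsum_ext n g g' : (forall i, (i < n)%nat -> g i = g' i) -> rsum n g = rsum n g'.
Proof.
  induction n as [|n IH]; simpl; intros H; [reflexivity|].
  rewrite IH by (intros; apply H; lia). rewrite H by lia. reflexivity.
Qed.

Lemma csum_minus n g g' : csum n (fun i => Cminus (g i) (g' i)) = Cminus (csum n g) (csum n g').
Proof. induction n as [|n IH]; simpl; [cext | rewrite IH; ring]. Qed.

Lemma csum_scal n c g : csum n (fun i => Cmult c (g i)) = Cmult c (csum n g).
Proof. induction n as [|n IH]; simpl; [cext | rewrite IH; ring]. Qed.

Lemma csum_conj n g : Cconj (csum n g) = csum n (fun i => Cconj (g i)).
Proof. induction n as [|n IH]; simpl; [cext | rewrite Cplus_conj, IH; reflexivity]. Qed.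

Lemma csum_Re n g : Re (csum n g) = rsum n (fun i => Re (g i)).
Proof. induction n as [|n IH]; simpl; [reflexivity | rewrite <- IH; reflexivity]. Qed.

Lemma csum_Im n g : Im (csum n g) = rsum n (fun i => Im (g i)).
Proof. induction n as [|n IH]; simpl; [reflexivity | rewrite <- IH; reflexivity]. Qed.

Lemma csum_Cmod n g : Cmod (csum n g) <= rsum n (fun i => Cmod (g i)).
Proof.
  induction n as [|n IH]; simpl; [rewrite Cmod_0; lra|].
  eapply Rle_trans; [apply Cmod_triangle | lra].
Qed.

Lemma rsum_le n a b : (forall i, (i < n)%nat -> a i <= b i) -> rsum n a <= rsum n b.
Proof.
  induction n as [|n IH]; simpl; intros H; [lra|].
  pose proof (H n ltac:(lia)). assert (rsum n a <= rsum n b) by (apply IH; intros; apply H; lia). lra.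
Qed.

Lemma rsum_nonneg n a : (forall i, (i < n)%nat -> 0 <= a i) -> 0 <= rsum n a.
Proof.
  induction n as [|n IH]; simpl; intros H; [lra|].
  pose proof (H n ltac:(lia)). assert (0 <= rsum n a) by (apply IH; intros; apply H; lia). lra.
Qed.

Lemma rsum_const n c : rsum n (fun _ => c) = INR n * c.
Proof. induction n as [|n IH]; simpl; [ring|]. rewrite IH. destruct n; simpl; ring. Qed.

Lemma rsum_scal n c a : rsum n (fun i => c * a i) = c * rsum n a.
Proof. induction n as [|n IH]; simpl; [ring | rewrite IH; ring]. Qed.

Lemma rsum_Cauchy_Schwarz n a b :
  (rsum n (fun i => a i * b i)) ^ 2 <= rsum n (fun i => a i ^ 2) * rsum n (fun i => b i ^ 2).
Proof.
  induction n as [|n IH]; [simpl; lra|]. rewrite !rsum_S.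
  set (S := rsum n (fun i => a i * b i)) in *. set (A := rsum n (fun i => a i ^ 2)) in *.
  set (B := rsum n (fun i => b i ^ 2)) in *.
  assert (HA : 0 <= A) by (apply rsum_nonneg; intros; nra).
  assert (HB : 0 <= B) by (apply rsum_nonneg; intros; nra).
  set (x := a n). set (y := b n).
  assert (K0 : 0 <= (x ^ 2 * B - A * y ^ 2) ^ 2) by apply pow2_ge_0.
  assert (K1 : 0 <= (x * y) ^ 2 * (A * B - S ^ 2)) by (apply Rmult_le_pos; [apply pow2_ge_0 | lra]).
  assert (K : (x ^ 2 * B + A * y ^ 2) ^ 2 >= 4 * (x * y * S) ^ 2) by nra.
  assert (K2 : 2 * S * x * y <= x ^ 2 * B + A * y ^ 2).
  { assert (0 <= x ^ 2 * B + A * y ^ 2) by nra.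
    destruct (Rle_lt_dec (2 * S * x * y) 0); [lra|].
    apply Rsqr_incr_0_var; [unfold Rsqr; nra | lra]. }
  nra.
Qed.

Lemma inner_diag_Re d x : Re (inner d x x) = rsum d (fun i => Cmod (x i) ^ 2).
Proof.
  unfold inner. rewrite csum_Re. apply rsum_ext. intros i _. rewrite Cmod2_alt.
  destruct (x i). unfold Re, Im; simpl. ring.
Qed.

Lemma inner_diag_real d x : inner d x x = RtoC (Re (inner d x x)).
Proof.
  apply C_eq_Re_Im; [rewrite re_RtoC; reflexivity|]. rewrite im_RtoC.
  unfold inner. rewrite csum_Im, <- (Rmult_0_r (INR d)), <- rsum_const. apply rsum_ext.
  intros i _. destruct (x i). unfold Im. simpl. ring.
Qed.

Lemma vnorm_sq d x : vnorm d x ^ 2 = Re (inner d x x).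
Proof.
  unfold vnorm. rewrite <- Rsqr_pow2. apply Rsqr_sqrt.
  rewrite inner_diag_Re. apply rsum_nonneg. intros. nra.
Qed.

Lemma vnorm_nonneg d x : 0 <= vnorm d x.
Proof. apply sqrt_pos. Qed.

Lemma inner_bound d x y : Cmod (inner d x y) <= rsum d (fun i => Cmod (x i) * Cmod (y i)).
Proof.
  unfold inner. eapply Rle_trans; [apply csum_Cmod|]. right.
  apply rsum_ext. intros. rewrite Cmod_mult, Cmod_conj. reflexivity.
Qed.

Lemma inner_Cauchy_Schwarz d x y : Cmod (inner d x y) <= vnorm d x * vnorm d y.
Proof.
  eapply Rle_trans; [apply inner_bound|].
  pose proof (rsum_Cauchy_Schwarz d (fun i => Cmod (x i)) (fun i => Cmod (y i))) as H. cbv beta in H.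
  rewrite <- !inner_diag_Re, <- !vnorm_sq in H.
  assert (0 <= rsum d (fun i => Cmod (x i) * Cmod (y i)))
    by (apply rsum_nonneg; intros; apply Rmult_le_pos; apply Cmod_ge_0).
  pose proof (vnorm_nonneg d x). pose proof (vnorm_nonneg d y).
  apply Rsqr_incr_0_var; unfold Rsqr; nra.
Qed.

Lemma inner_conj d x y : Cconj (inner d x y) = inner d y x.
Proof. unfold inner. rewrite csum_conj. apply csum_ext. intros. rewrite Cmult_conj, Cconj_conj. ring. Qed.

Lemma inner_minus_l d x y z :
  inner d (fun i => Cminus (x i) (y i)) z = Cminus (inner d x z) (inner d y z).
Proof. unfold inner. rewrite <- csum_minus. apply csum_ext. intros. ring. Qed.

Lemma inner_minus_r d x y z :
  inner d z (fun i => Cminus (x i) (y i)) = Cminus (inner d z x) (inner d z y).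
Proof. unfold inner. rewrite <- csum_minus. apply csum_ext. intros. rewrite Cminus_conj. ring. Qed.

(** * Kernel forms *)

Definition lsum {A : Type} (l : list A) (g : A -> CC) : CC :=
  fold_right (fun a acc => Cplus acc (g a)) (RtoC 0) l.

Definition lsumR {A : Type} (l : list A) (g : A -> R) : R :=
  fold_right (fun a acc => acc + g a) 0 l.

Lemma lsum_nil {A} (g : A -> CC) : lsum [] g = RtoC 0.
Proof. reflexivity. Qed.

Lemma lsum_cons {A} a l (g : A -> CC) : lsum (a :: l) g = Cplus (lsum l g) (g a).
Proof. reflexivity. Qed.

Lemma lsumR_cons {A} a l (g : A -> R) : lsumR (a :: l) g = lsumR l g + g a.
Proof. reflexivity. Qed.

Lemma lsum_app {A} l1 l2 (g : A -> CC) : lsum (l1 ++ l2) g = Cplus (lsum l1 g) (lsum l2 g).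
Proof.
  induction l1 as [|a l1 IH]; simpl app; [rewrite lsum_nil; ring|].
  rewrite !lsum_cons, IH. ring.
Qed.

Lemma lsum_ext {A} l (g g' : A -> CC) : (forall a, In a l -> g a = g' a) -> lsum l g = lsum l g'.
Proof.
  induction l as [|a l IH]; intros H; [reflexivity|].
  rewrite !lsum_cons, IH, H; [reflexivity | left; reflexivity | intros; apply H; right; assumption].
Qed.

Lemma lsum_plus {A} l (g g' : A -> CC) :
  lsum l (fun a => Cplus (g a) (g' a)) = Cplus (lsum l g) (lsum l g').
Proof. induction l as [|a l IH]; [unfold lsum; simpl; cext | rewrite !lsum_cons, IH; ring]. Qed.

Lemma lsum_scal {A} l c (g : A -> CC) : lsum l (fun a => Cmult c (g a)) = Cmult c (lsum l g).
Proof. induction l as [|a l IH]; [unfold lsum; simpl; cext | rewrite !lsum_cons, IH; ring]. Qed.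

Lemma lsum_opp {A} l (g : A -> CC) : lsum l (fun a => Copp (g a)) = Copp (lsum l g).
Proof. induction l as [|a l IH]; [unfold lsum; simpl; cext | rewrite !lsum_cons, IH; ring]. Qed.

Lemma lsum_conj {A} l (g : A -> CC) : Cconj (lsum l g) = lsum l (fun a => Cconj (g a)).
Proof. induction l as [|a l IH]; [unfold lsum; simpl; cext | rewrite !lsum_cons, Cplus_conj, IH; reflexivity]. Qed.

Lemma lsum_map {A B} (m : A -> B) l (g : B -> CC) : lsum (map m l) g = lsum l (fun a => g (m a)).
Proof. induction l as [|a l IH]; [reflexivity | simpl map; rewrite !lsum_cons, IH; reflexivity]. Qed.

Lemma lsum_swap {A B} (s : list A) (t : list B) (F : A -> B -> CC) :
  lsum s (fun p => lsum t (fun q => F p q)) = lsum t (fun q => lsum s (fun p => F p q)).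
Proof.
  induction s as [|a s IH].
  - rewrite lsum_nil. induction t as [|b t IHt]; [reflexivity|]. rewrite lsum_cons, <- IHt, lsum_nil. cext.
  - rewrite lsum_cons, IH, <- lsum_plus. apply lsum_ext. intros. rewrite lsum_cons. reflexivity.
Qed.

Lemma lsum_csum {A} (s : list A) n (F : A -> nat -> CC) :
  lsum s (fun p => csum n (fun i => F p i)) = csum n (fun i => lsum s (fun p => F p i)).
Proof.
  induction n as [|n IH]; simpl.
  - induction s as [|a s IHs]; [reflexivity|]. rewrite lsum_cons, IHs. cext.
  - rewrite lsum_plus, IH. reflexivity.
Qed.

Lemma lsum_Cmod {A} l (g : A -> CC) : Cmod (lsum l g) <= lsumR l (fun a => Cmod (g a)).
Proof.
  induction l as [|a l IH]; [unfold lsum, lsumR; simpl; rewrite Cmod_0; lra|].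
  rewrite lsum_cons, lsumR_cons. eapply Rle_trans; [apply Cmod_triangle | lra].
Qed.

Lemma lsumR_le {A} l (g g' : A -> R) : (forall a, In a l -> g a <= g' a) -> lsumR l g <= lsumR l g'.
Proof.
  induction l as [|a l IH]; intros H; [unfold lsumR; simpl; lra|]. rewrite !lsumR_cons.
  pose proof (H a (or_introl eq_refl)). assert (lsumR l g <= lsumR l g') by (apply IH; intros; apply H; right; auto).
  lra.
Qed.

Lemma lsumR_nonneg {A} l (g : A -> R) : (forall a, In a l -> 0 <= g a) -> 0 <= lsumR l g.
Proof.
  induction l as [|a l IH]; intros H; [unfold lsumR; simpl; lra|]. rewrite lsumR_cons.
  pose proof (H a (or_introl eq_refl)). assert (0 <= lsumR l g) by (apply IH; intros; apply H; right; auto).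
  lra.
Qed.

Lemma lsumR_scal {A} l c (g : A -> R) : lsumR l (fun a => c * g a) = c * lsumR l g.
Proof. induction l as [|a l IH]; [unfold lsumR; simpl; ring | rewrite !lsumR_cons, IH; ring]. Qed.

Lemma keval_lsum {X} (K : X -> X -> CC) s z :
  keval K s z = lsum s (fun p => Cmult (fst p) (K z (snd p))).
Proof. reflexivity. Qed.

(* [kform K s t] is the inner product of the kernel combinations [s] and [t]
   in the RKHS of [K]; [kpair s h] is the inner product of [h] with [s]. *)
Definition kform {X} (K : X -> X -> CC) (s t : kcomb X) : CC :=
  lsum s (fun p => lsum t (fun q => Cmult (Cmult (fst p) (Cconj (fst q))) (K (snd q) (snd p)))).

Definition kpair {X} (s : kcomb X) (h : X -> CC) : CC :=
  lsum s (fun q => Cmult (Cconj (fst q)) (h (snd q))).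

Lemma knormsq_kform {X} (K : X -> X -> CC) s : knormsq K s = Re (kform K s s).
Proof. reflexivity. Qed.

Definition kscale {X} (c : CC) (s : kcomb X) : kcomb X := map (fun p => (Cmult c (fst p), snd p)) s.

Lemma kneg_kscale {X} (s : kcomb X) : kneg s = kscale (Copp (RtoC 1)) s.
Proof. unfold kneg, kscale. apply map_ext. intros [a b]. simpl. f_equal. ring. Qed.

Lemma kform_app_l {X} (K : X -> X -> CC) s1 s2 t :
  kform K (s1 ++ s2) t = Cplus (kform K s1 t) (kform K s2 t).
Proof. apply lsum_app. Qed.

Lemma kform_app_r {X} (K : X -> X -> CC) s t1 t2 :
  kform K s (t1 ++ t2) = Cplus (kform K s t1) (kform K s t2).
Proof. unfold kform. rewrite <- lsum_plus. apply lsum_ext. intros. apply lsum_app. Qed.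

Lemma kform_scale_l {X} (K : X -> X -> CC) c s t : kform K (kscale c s) t = Cmult c (kform K s t).
Proof.
  unfold kform, kscale. rewrite lsum_map, <- lsum_scal. apply lsum_ext. intros. simpl.
  rewrite <- lsum_scal. apply lsum_ext. intros. ring.
Qed.

Lemma kform_scale_r {X} (K : X -> X -> CC) c s t : kform K s (kscale c t) = Cmult (Cconj c) (kform K s t).
Proof.
  unfold kform, kscale. rewrite <- lsum_scal. apply lsum_ext. intros. rewrite lsum_map, <- lsum_scal.
  apply lsum_ext. intros. simpl. rewrite Cmult_conj. ring.
Qed.

Lemma kform_neg_l {X} (K : X -> X -> CC) s t : kform K (kneg s) t = Copp (kform K s t).
Proof. rewrite kneg_kscale, kform_scale_l. ring. Qed.

Lemma kform_keval {X} (K : X -> X -> CC) s t :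
  kform K s t = lsum t (fun q => Cmult (Cconj (fst q)) (keval K s (snd q))).
Proof.
  unfold kform. rewrite lsum_swap. apply lsum_ext. intros q _.
  rewrite keval_lsum, <- lsum_scal. apply lsum_ext. intros. ring.
Qed.

Lemma kform_herm {X} (K : X -> X -> CC) s t :
  (forall a b, K b a = Cconj (K a b)) -> kform K t s = Cconj (kform K s t).
Proof.
  intros HK. unfold kform. rewrite lsum_swap, lsum_conj. apply lsum_ext. intros.
  rewrite lsum_conj. apply lsum_ext. intros. rewrite HK, !Cmult_conj, Cconj_conj. ring.
Qed.

Definition kernel_psd {X} (K : X -> X -> CC) (P : X -> Prop) : Prop :=
  forall s, List.Forall (fun p => P (snd p)) s -> 0 <= Re (kform K s s).

Lemma Forall_kscale {X} (P : X -> Prop) c s :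
  List.Forall (fun p => P (snd p)) s -> List.Forall (fun p => P (snd p)) (kscale c s).
Proof.
  intros H. apply List.Forall_map. eapply List.Forall_impl; [|exact H]. intros [a b]; simpl; auto.
Qed.

Lemma Forall_kneg {X} (P : X -> Prop) s :
  List.Forall (fun p => P (snd p)) s -> List.Forall (fun p => P (snd p)) (kneg s).
Proof. rewrite kneg_kscale. apply Forall_kscale. Qed.

(* The squared norm of [s - r <s, t> t] is a nonnegative quadratic in the real [r]. *)
Lemma kform_Cauchy_Schwarz {X} (K : X -> X -> CC) (P : X -> Prop) s t :
  kernel_psd K P -> (forall a b, K b a = Cconj (K a b)) ->
  List.Forall (fun p => P (snd p)) s -> List.Forall (fun p => P (snd p)) t ->
  Cmod (kform K s t) <= sqrt (Re (kform K s s)) * sqrt (Re (kform K t t)).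
Proof.
  intros Hpsd HK Hs Ht.
  set (A := Re (kform K s s)). set (D := Re (kform K t t)). set (be := kform K s t).
  assert (HA : 0 <= A) by (apply Hpsd; auto). assert (HD : 0 <= D) by (apply Hpsd; auto).
  assert (Hq : forall r : R, 0 <= A - 2 * r * Cmod be ^ 2 + r ^ 2 * Cmod be ^ 2 * D).
  { intros r. set (lam := Cmult (RtoC (- r)) be).
    pose proof (Hpsd (s ++ kscale lam t) ltac:(apply List.Forall_app; split; [|apply Forall_kscale]; auto)) as H.
    rewrite kform_app_l, !kform_app_r, !kform_scale_l, !kform_scale_r, (kform_herm K s t HK) in H.
    fold be in H.
    replace (Re (Cplus (Cplus (kform K s s) (Cmult (Cconj lam) be))
                       (Cplus (Cmult lam (Cconj be)) (Cmult lam (Cmult (Cconj lam) (kform K t t))))))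
      with (A - 2 * r * Cmod be ^ 2 + r ^ 2 * Cmod be ^ 2 * D) in H; [exact H|].
    unfold lam, A, D. rewrite Cmod2_alt.
    destruct be as [b1 b2], (kform K s s) as [s1 s2], (kform K t t) as [t1 t2].
    unfold Re, Im; simpl. ring. }
  assert (Hsq : Cmod be ^ 2 <= A * D).
  { destruct (Rlt_or_le 0 D) as [HD'|HD'].
    - specialize (Hq (/ D)).
      replace ((/ D) ^ 2 * Cmod be ^ 2 * D) with (/ D * Cmod be ^ 2) in Hq by (field; lra).
      apply Rmult_le_reg_r with (/ D); [apply Rinv_0_lt_compat; lra|].
      replace (A * D * / D) with A by (field; lra). nra.
    - assert (HD0 : D = 0) by lra. rewrite HD0, Rmult_0_r.
      destruct (Req_dec (Cmod be) 0) as [E|E]; [rewrite E; lra|].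
      exfalso. assert (0 < Cmod be ^ 2) by (pose proof (Cmod_ge_0 be); apply pow_lt; lra).
      specialize (Hq ((A + 1) / (2 * Cmod be ^ 2))). rewrite HD0 in Hq.
      replace (A - 2 * ((A + 1) / (2 * Cmod be ^ 2)) * Cmod be ^ 2 + ((A + 1) / (2 * Cmod be ^ 2)) ^ 2 * Cmod be ^ 2 * 0)
        with (-1) in Hq by (field; lra). lra. }
  rewrite <- sqrt_mult, <- (sqrt_pow2 (Cmod be)) by (auto || apply Cmod_ge_0).
  apply sqrt_le_1_alt. exact Hsq.
Qed.

Lemma kform_ext {X} (K K' : X -> X -> CC) s t :
  (forall a b, K a b = K' a b) -> kform K s t = kform K' s t.
Proof. intros H. apply lsum_ext. intros. apply lsum_ext. intros. rewrite H. reflexivity. Qed.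

Lemma kform_csum_kernel {X} n (F : nat -> X -> X -> CC) s t :
  kform (fun a b => csum n (fun k => F k a b)) s t = csum n (fun k => kform (F k) s t).
Proof.
  unfold kform.
  rewrite <- (lsum_csum s n (fun p k => lsum t (fun q => Cmult (Cmult (fst p) (Cconj (fst q))) (F k (snd q) (snd p))))).
  apply lsum_ext. intros p _.
  rewrite <- (lsum_csum t n (fun q k => Cmult (Cmult (fst p) (Cconj (fst q))) (F k (snd q) (snd p)))).
  apply lsum_ext. intros q _. rewrite <- csum_scal. reflexivity.
Qed.

Lemma kform_feature_kernel {X} (K : X -> X -> CC) (phi : X -> nat -> CC) d s t :
  kform (fun a b => Cmult (K a b) (csum d (fun i => Cmult (phi a i) (Cconj (phi b i))))) s t
  = csum d (fun i => kform K (map (fun p => (Cmult (fst p) (Cconj (phi (snd p) i)), snd p)) s)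
                             (map (fun p => (Cmult (fst p) (Cconj (phi (snd p) i)), snd p)) t)).
Proof.
  rewrite (kform_ext _ (fun a b => csum d (fun i => Cmult (K a b) (Cmult (phi a i) (Cconj (phi b i))))))
    by (intros; rewrite csum_scal; reflexivity).
  rewrite kform_csum_kernel. apply csum_ext. intros i _.
  unfold kform. rewrite lsum_map. apply lsum_ext. intros p _. rewrite lsum_map. apply lsum_ext. intros q _.
  simpl. rewrite Cmult_conj, Cconj_conj. ring.
Qed.

Lemma kform_const_kernel {X} (s : kcomb X) :
  kform (fun _ _ => RtoC 1) s s = Cmult (lsum s fst) (Cconj (lsum s fst)).
Proof.
  unfold kform. rewrite Cmult_comm, <- lsum_scal. apply lsum_ext. intros p _.
  rewrite lsum_conj, Cmult_comm, <- lsum_scal. apply lsum_ext. intros. ring.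
Qed.

(* Schur product theorem for powers of a Gram kernel. *)
Lemma inner_pow_psd {X} (g : X -> nat -> CC) d k s :
  0 <= Re (kform (fun a b => Cpow (inner d (g a) (g b)) k) s s).
Proof.
  revert s. induction k as [|k IH]; intros s.
  - simpl. rewrite kform_const_kernel, <- Cmod2_conj, re_RtoC. apply pow2_ge_0.
  - rewrite (kform_ext _ (fun a b => Cmult (Cpow (inner d (g a) (g b)) k)
                                           (csum d (fun i => Cmult (g a i) (Cconj (g b i))))))
      by (intros a b; simpl; unfold inner; ring).
    rewrite kform_feature_kernel, csum_Re. apply rsum_nonneg. intros. apply IH.
Qed.

Lemma kform_minus_kernel {X} (K1 K2 : X -> X -> CC) s t :
  Cminus (kform K1 s t) (kform K2 s t) = kform (fun a b => Cminus (K1 a b) (K2 a b)) s t.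
Proof.
  unfold kform, Cminus at 1. rewrite <- lsum_opp, <- lsum_plus. apply lsum_ext. intros p _.
  rewrite <- lsum_opp, <- lsum_plus. apply lsum_ext. intros. ring.
Qed.

Lemma kform_bound {X} (K : X -> X -> CC) s t E :
  (forall p q, In p s -> In q t -> Cmod (K (snd q) (snd p)) <= E) ->
  Cmod (kform K s t) <= E * lsumR s (fun p => Cmod (fst p)) * lsumR t (fun q => Cmod (fst q)).
Proof.
  intros H. unfold kform. set (Lt := lsumR t (fun q => Cmod (fst q))).
  eapply Rle_trans; [apply lsum_Cmod|].
  replace (E * lsumR s (fun p => Cmod (fst p)) * Lt) with (lsumR s (fun p => (E * Lt) * Cmod (fst p)))
    by (rewrite lsumR_scal; ring).
  apply lsumR_le. intros p Hp. eapply Rle_trans; [apply lsum_Cmod|].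
  replace (E * Lt * Cmod (fst p)) with (lsumR t (fun q => (Cmod (fst p) * E) * Cmod (fst q)))
    by (unfold Lt; rewrite lsumR_scal; ring).
  apply lsumR_le. intros q Hq. rewrite !Cmod_mult, Cmod_conj. specialize (H p q Hp Hq).
  assert (0 <= Cmod (fst p) * Cmod (fst q)) by (apply Rmult_le_pos; apply Cmod_ge_0). nra.
Qed.

Lemma geometric_sum (q : CC) n :
  Cmult (csum n (fun k => Cpow q k)) (Cminus (RtoC 1) q) = Cminus (RtoC 1) (Cpow q n).
Proof. induction n as [|n IH]; simpl; [cext | rewrite Cmult_plus_distr_r, IH; ring]. Qed.

Lemma geometric_tail_bound (q : CC) n rho : Cmod q <= rho -> rho < 1 ->
  Cmod (Cminus (Cinv (Cminus (RtoC 1) q)) (csum n (fun k => Cpow q k))) <= rho ^ n / (1 - rho).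
Proof.
  intros Hq Hr.
  pose proof (Cmod_reverse_triangle (RtoC 1) q) as H1. rewrite Cmod_1 in H1.
  assert (Hnz : Cminus (RtoC 1) q <> RtoC 0) by (intro E; rewrite E, Cmod_0 in H1; lra).
  replace (Cminus (Cinv (Cminus (RtoC 1) q)) (csum n (fun k => Cpow q k)))
    with (Cmult (Cpow q n) (Cinv (Cminus (RtoC 1) q))).
  2: { pose proof (geometric_sum q n) as G.
       replace (csum n (fun k => Cpow q k)) with (Cmult (Cminus (RtoC 1) (Cpow q n)) (Cinv (Cminus (RtoC 1) q)))
         by (rewrite <- G; field; exact Hnz).
       field. exact Hnz. }
  rewrite Cmod_mult, Cmod_pow, Cmod_inv by exact Hnz.
  pose proof (Cmod_ge_0 q).
  apply Rmult_le_compat; [apply pow_le; lra | left; apply Rinv_0_lt_compat; lra | apply pow_incr; lra |].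
  apply Rinv_le_contravar; lra.
Qed.

Lemma Cconj_Cinv (z : CC) : Cconj (Cinv z) = Cinv (Cconj z).
Proof.
  destruct z as [x y]. unfold Cinv, Cconj. simpl.
  replace (- y * (- y * 1)) with (y * (y * 1)) by ring. f_equal. unfold Rdiv. ring.
Qed.

Lemma kf_herm d f a b : kf d f b a = Cconj (kf d f a b).
Proof. unfold kf. rewrite Cconj_Cinv, Cminus_conj, inner_conj. f_equal. f_equal. cext. Qed.

Definition max_snd {X} (g : X -> R) (s : kcomb X) : R := fold_right (fun p acc => Rmax acc (g (snd p))) 0 s.

Lemma max_snd_ge {X} (g : X -> R) s p : In p s -> g (snd p) <= max_snd g s.
Proof.
  induction s as [|a s IH]; simpl; [tauto|]. intros [H|H]; [subst; apply Rmax_r|].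
  eapply Rle_trans; [apply IH, H | apply Rmax_l].
Qed.

Lemma max_snd_nonneg {X} (g : X -> R) s : 0 <= max_snd g s.
Proof. induction s as [|a s IH]; simpl; [lra | eapply Rle_trans; [exact IH | apply Rmax_l]]. Qed.

Lemma max_snd_lt {X} (g : X -> R) s c : 0 < c -> List.Forall (fun p => g (snd p) < c) s -> max_snd g s < c.
Proof. intros Hc H. induction H; simpl; [exact Hc | apply Rmax_lub_lt; assumption]. Qed.

(* [kf] is the limit of the truncated geometric series [sum_(k<n) <f a, f b>^k],
   each of which is positive semidefinite. *)
Lemma kf_psd d (f : CC -> nat -> CC) : (forall x, udisc x -> vnorm d (f x) < 1) -> kernel_psd (kf d f) udisc.
Proof.
  intros Hf s Hs. apply Rnot_lt_le. intro Hneg. set (eta := - Re (kform (kf d f) s s)).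
  assert (Heta : 0 < eta) by (unfold eta; lra).
  set (rho := max_snd (fun x => vnorm d (f x)) s).
  assert (Hr0 : 0 <= rho) by apply max_snd_nonneg.
  assert (Hr1 : rho < 1).
  { apply max_snd_lt; [lra|]. eapply List.Forall_impl; [|exact Hs]. intros p Hp. apply Hf, Hp. }
  set (Ls := lsumR s (fun p => Cmod (fst p))).
  assert (HLs : 0 <= Ls) by (apply lsumR_nonneg; intros; apply Cmod_ge_0).
  destruct (pow_lt_1_zero rho ltac:(rewrite Rabs_right; lra) (eta * (1 - rho) / (Ls * Ls + 1)))
    as [n Hn]; [apply Rdiv_lt_0_compat; nra|].
  specialize (Hn n (le_n n)). rewrite Rabs_right in Hn by (apply Rle_ge, pow_le; lra).
  set (Kn := fun a b => csum n (fun k => Cpow (inner d (f a) (f b)) k)).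
  assert (HKn : 0 <= Re (kform Kn s s)).
  { unfold Kn. rewrite kform_csum_kernel, csum_Re. apply rsum_nonneg. intros. apply inner_pow_psd. }
  assert (Hdiff : Cmod (Cminus (kform (kf d f) s s) (kform Kn s s)) <= rho ^ n / (1 - rho) * Ls * Ls).
  { rewrite kform_minus_kernel. apply kform_bound. intros p q Hp Hq. unfold kf, Kn.
    apply geometric_tail_bound; [|exact Hr1]. eapply Rle_trans; [apply inner_Cauchy_Schwarz|].
    pose proof (max_snd_ge (fun x => vnorm d (f x)) s q Hq) as Hq_rho.
    pose proof (max_snd_ge (fun x => vnorm d (f x)) s p Hp) as Hp_rho.
    pose proof (vnorm_nonneg d (f (snd q))). pose proof (vnorm_nonneg d (f (snd p))).
    simpl in Hq_rho, Hp_rho. fold rho in Hq_rho, Hp_rho. nra. }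
  assert (Hre : Re (kform Kn s s) - Re (kform (kf d f) s s) <= Cmod (Cminus (kform (kf d f) s s) (kform Kn s s))).
  { eapply Rle_trans; [|apply re_le_Cmod]. eapply Rle_trans; [|apply Rabs_maj2].
    right. rewrite Re_Cminus. ring. }
  assert (rho ^ n / (1 - rho) * Ls * Ls < eta).
  { assert (rho ^ n * (Ls * Ls + 1) < eta * (1 - rho)).
    { apply Rmult_lt_compat_r with (r := Ls * Ls + 1) in Hn; [|nra].
      unfold Rdiv in Hn. rewrite Rmult_assoc, Rinv_l in Hn by nra. lra. }
    assert (rho ^ n * (Ls * Ls) < eta * (1 - rho)) by (assert (0 <= rho ^ n) by (apply pow_le; lra); nra).
    apply Rmult_lt_reg_r with (1 - rho); [lra|].
    replace (rho ^ n / (1 - rho) * Ls * Ls * (1 - rho)) with (rho ^ n * (Ls * Ls)) by (field; lra). lra. }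
  unfold eta in *. lra.
Qed.

Lemma lsum_pointwise_limit {A} (v : list A) (F : nat -> A -> CC) (G : A -> CC) :
  (forall q, In q v -> forall eps, 0 < eps -> exists N, forall n, (N <= n)%nat -> Cmod (Cminus (F n q) (G q)) < eps) ->
  forall eps, 0 < eps -> exists N, forall n, (N <= n)%nat -> Cmod (Cminus (lsum v (F n)) (lsum v G)) < eps.
Proof.
  induction v as [|a v IH]; intros H eps He.
  - exists O. intros. rewrite !lsum_nil. replace (Cminus (RtoC 0) (RtoC 0)) with (RtoC 0) by ring.
    rewrite Cmod_0. exact He.
  - destruct (IH ltac:(intros q Hq; apply H; right; auto) (eps / 2) ltac:(lra)) as [N1 HN1].
    destruct (H a ltac:(left; auto) (eps / 2) ltac:(lra)) as [N2 HN2].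
    exists (Nat.max N1 N2). intros n Hn. rewrite !lsum_cons.
    replace (Cminus (Cplus (lsum v (F n)) (F n a)) (Cplus (lsum v G) (G a)))
      with (Cplus (Cminus (lsum v (F n)) (lsum v G)) (Cminus (F n a) (G a))) by ring.
    eapply Rle_lt_trans; [apply Cmod_triangle|].
    specialize (HN1 n ltac:(lia)). specialize (HN2 n ltac:(lia)). lra.
Qed.

Section PairingBound.

Variables (X : Type) (Dom : X -> Prop) (K : X -> X -> CC).
Hypothesis K_psd : kernel_psd K Dom.
Hypothesis K_herm : forall a b, K b a = Cconj (K a b).

Lemma kform_Cauchy_seq_bounded (s : nat -> kcomb X) :
  (forall n, List.Forall (fun p => Dom (snd p)) (s n)) ->
  (forall eps, 0 < eps -> exists N, forall m n, (N <= m)%nat -> (N <= n)%nat ->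
     knormsq K (s m ++ kneg (s n)) < eps) ->
  exists M N, 0 <= M /\ forall v n, List.Forall (fun p => Dom (snd p)) v -> (N <= n)%nat ->
    Cmod (kform K (s n) v) <= M * sqrt (knormsq K v).
Proof.
  intros Hpts Hcau. destruct (Hcau 1 ltac:(lra)) as [N HN].
  set (M := sqrt (Re (kform K (s N) (s N))) + 1).
  exists M, N. split; [unfold M; pose proof (sqrt_pos (Re (kform K (s N) (s N)))); lra|].
  intros v n Hv Hn.
  set (t := s n ++ kneg (s N)).
  assert (Ht : List.Forall (fun p => Dom (snd p)) t)
    by (apply List.Forall_app; split; [apply Hpts | apply Forall_kneg, Hpts]).
  replace (kform K (s n) v) with (Cplus (kform K (s N) v) (kform K t v))
    by (unfold t; rewrite kform_app_l, kform_neg_l; ring).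
  eapply Rle_trans; [apply Cmod_triangle|].
  pose proof (kform_Cauchy_Schwarz K Dom (s N) v K_psd K_herm (Hpts N) Hv).
  pose proof (kform_Cauchy_Schwarz K Dom t v K_psd K_herm Ht Hv).
  specialize (HN n N Hn (le_n N)). fold t in HN. rewrite knormsq_kform in HN.
  assert (sqrt (Re (kform K t t)) <= 1) by (rewrite <- sqrt_1; apply sqrt_le_1_alt; lra).
  rewrite knormsq_kform. unfold M.
  assert (0 <= sqrt (Re (kform K v v))) by apply sqrt_pos.
  nra.
Qed.

Lemma in_RKHS_pairing_bound (h : X -> CC) : in_RKHS Dom K h ->
  exists M, 0 <= M /\ forall v, List.Forall (fun p => Dom (snd p)) v ->
    Cmod (kpair v h) <= M * sqrt (knormsq K v).
Proof.
  intros [s [Hpts [Hcau Hconv]]].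
  destruct (kform_Cauchy_seq_bounded s Hpts Hcau) as [M [N [HM Hb]]].
  exists M. split; [exact HM|]. intros v Hv.
  apply Rnot_lt_le. intro Hlt.
  set (gap := Cmod (kpair v h) - M * sqrt (knormsq K v)).
  destruct (lsum_pointwise_limit v (fun n q => Cmult (Cconj (fst q)) (keval K (s n) (snd q)))
              (fun q => Cmult (Cconj (fst q)) (h (snd q)))) with (eps := gap) as [N2 HN2].
  { intros q Hq eps He. rewrite List.Forall_forall in Hv. pose proof (Cmod_ge_0 (fst q)).
    destruct (Hconv (snd q) (Hv q Hq) (eps / (Cmod (fst q) + 1))) as [N3 HN3];
      [apply Rdiv_lt_0_compat; lra|].
    exists N3. intros n Hn. specialize (HN3 n Hn).
    replace (Cminus (Cmult (Cconj (fst q)) (keval K (s n) (snd q))) (Cmult (Cconj (fst q)) (h (snd q))))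
      with (Cmult (Cconj (fst q)) (Cminus (keval K (s n) (snd q)) (h (snd q)))) by ring.
    rewrite Cmod_mult, Cmod_conj.
    apply Rmult_lt_compat_l with (r := Cmod (fst q) + 1) in HN3; [|lra].
    replace ((Cmod (fst q) + 1) * (eps / (Cmod (fst q) + 1))) with eps in HN3 by (field; lra).
    pose proof (Cmod_ge_0 (Cminus (keval K (s n) (snd q)) (h (snd q)))). nra. }
  { unfold gap. lra. }
  specialize (HN2 (Nat.max N N2) ltac:(lia)). specialize (Hb v (Nat.max N N2) Hv ltac:(lia)).
  rewrite kform_keval in Hb.
  pose proof (Cmod_reverse_triangle (kpair v h)
    (lsum v (fun q => Cmult (Cconj (fst q)) (keval K (s (Nat.max N N2)) (snd q))))).
  rewrite <- Cmod_opp in HN2. unfold kpair in *.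
  replace (Copp (Cminus (lsum v (fun q => Cmult (Cconj (fst q)) (keval K (s (Nat.max N N2)) (snd q))))
                        (lsum v (fun q => Cmult (Cconj (fst q)) (h (snd q))))))
    with (Cminus (lsum v (fun q => Cmult (Cconj (fst q)) (h (snd q))))
                 (lsum v (fun q => Cmult (Cconj (fst q)) (keval K (s (Nat.max N N2)) (snd q)))))
    in HN2 by ring.
  unfold gap, kpair in *. lra.
Qed.

End PairingBound.

(** * Holomorphic functions that are C^2 up to the boundary *)

Definition holo_C2 (g gx gy gxx gxy gyx gyy : CC -> CC) : Prop :=
  (forall z, udisc z -> is_derive g z (gx z)) /\
  (forall z, udisc z -> is_pdx g z (gx z) /\ is_pdy g z (gy z) /\ is_pdx gx z (gxx z) /\
      is_pdy gx z (gxy z) /\ is_pdx gy z (gyx z) /\ is_pdy gy z (gyy z)) /\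
  cont_on_cdisc g /\ cont_on_cdisc gx /\ cont_on_cdisc gy /\ cont_on_cdisc gxx /\
  cont_on_cdisc gxy /\ cont_on_cdisc gyx /\ cont_on_cdisc gyy.

Lemma is_derive_CC_Cmult_l (F : CC -> CC) c t l :
  is_derive F t l -> is_derive (fun s => Cmult c (F s)) t (Cmult c l).
Proof.
  rewrite !is_derive_CC_eps. intros H eps He. pose proof (Cmod_ge_0 c).
  destruct (H (eps / (Cmod c + 1))) as [d [Hd H']]; [apply Rdiv_lt_0_compat; lra|].
  exists d. split; [exact Hd|]. intros y Hy. specialize (H' y Hy).
  replace (Cminus (Cminus (Cmult c (F y)) (Cmult c (F t))) (Cmult (Cminus y t) (Cmult c l)))
    with (Cmult c (Cminus (Cminus (F y) (F t)) (Cmult (Cminus y t) l))) by ring.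
  rewrite Cmod_mult. pose proof (Cmod_ge_0 (Cminus y t)).
  assert (Cmod c * (eps / (Cmod c + 1)) <= eps).
  { apply Rmult_le_reg_r with (Cmod c + 1); [lra|].
    unfold Rdiv. rewrite Rmult_assoc, Rmult_assoc, Rinv_l by lra. nra. }
  eapply Rle_trans; [apply Rmult_le_compat_l; [lra | exact H']|]. nra.
Qed.

Lemma is_derive_CC_plus (F G : CC -> CC) t l1 l2 : is_derive F t l1 -> is_derive G t l2 ->
  is_derive (fun s => Cplus (F s) (G s)) t (Cplus l1 l2).
Proof. intros H1 H2. exact (is_derive_plus F G t l1 l2 H1 H2). Qed.

Lemma is_derive_RC_plus (F G : R -> CC) t l1 l2 : is_derive F t l1 -> is_derive G t l2 ->
  is_derive (fun s => Cplus (F s) (G s)) t (Cplus l1 l2).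
Proof. intros H1 H2. exact (is_derive_plus F G t l1 l2 H1 H2). Qed.

Lemma cont_on_cdisc_plus g1 g2 :
  cont_on_cdisc g1 -> cont_on_cdisc g2 -> cont_on_cdisc (fun z => Cplus (g1 z) (g2 z)).
Proof.
  intros H1 H2 z Hz eps He.
  destruct (H1 z Hz (eps / 2) ltac:(lra)) as [d1 [Hd1 H1']].
  destruct (H2 z Hz (eps / 2) ltac:(lra)) as [d2 [Hd2 H2']].
  exists (Rmin d1 d2). split; [apply Rmin_pos; auto|]. intros w Hw Hwz.
  specialize (H1' w Hw (Rlt_le_trans _ _ _ Hwz (Rmin_l _ _))).
  specialize (H2' w Hw (Rlt_le_trans _ _ _ Hwz (Rmin_r _ _))).
  replace (Cminus (Cplus (g1 w) (g2 w)) (Cplus (g1 z) (g2 z)))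
    with (Cplus (Cminus (g1 w) (g1 z)) (Cminus (g2 w) (g2 z))) by ring.
  eapply Rle_lt_trans; [apply Cmod_triangle | lra].
Qed.

Lemma cont_on_cdisc_scal c g : cont_on_cdisc g -> cont_on_cdisc (fun z => Cmult c (g z)).
Proof.
  intros H z Hz eps He. pose proof (Cmod_ge_0 c).
  destruct (H z Hz (eps / (Cmod c + 1))) as [d [Hd H']]; [apply Rdiv_lt_0_compat; lra|].
  exists d. split; [exact Hd|]. intros w Hw Hwz. specialize (H' w Hw Hwz).
  replace (Cminus (Cmult c (g w)) (Cmult c (g z))) with (Cmult c (Cminus (g w) (g z))) by ring.
  rewrite Cmod_mult.
  assert (Cmod c * (eps / (Cmod c + 1)) < eps).
  { apply Rmult_lt_reg_r with (Cmod c + 1); [lra|].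
    unfold Rdiv. rewrite Rmult_assoc, Rmult_assoc, Rinv_l by lra. nra. }
  pose proof (Cmod_ge_0 (Cminus (g w) (g z))). nra.
Qed.

Lemma cont_on_cdisc_const (c : CC) : cont_on_cdisc (fun _ => c).
Proof.
  intros z _ eps He. exists 1. split; [lra|]. intros.
  replace (Cminus c c) with (RtoC 0) by ring. rewrite Cmod_0. exact He.
Qed.

Lemma holo_C2_plus g gx gy gxx gxy gyx gyy h hx hy hxx hxy hyx hyy :
  holo_C2 g gx gy gxx gxy gyx gyy -> holo_C2 h hx hy hxx hxy hyx hyy ->
  holo_C2 (fun z => Cplus (g z) (h z)) (fun z => Cplus (gx z) (hx z)) (fun z => Cplus (gy z) (hy z))
       (fun z => Cplus (gxx z) (hxx z)) (fun z => Cplus (gxy z) (hxy z))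
       (fun z => Cplus (gyx z) (hyx z)) (fun z => Cplus (gyy z) (hyy z)).
Proof.
  intros [G1 [G2 [G3 [G4 [G5 [G6 [G7 [G8 G9]]]]]]]] [H1 [H2 [H3 [H4 [H5 [H6 [H7 [H8 H9]]]]]]]].
  refine (conj _ (conj _ (conj _ (conj _ (conj _ (conj _ (conj _ (conj _ _))))))));
    try (apply cont_on_cdisc_plus; assumption).
  - intros z Hz. apply is_derive_CC_plus; auto.
  - intros z Hz. destruct (G2 z Hz) as [A1 [A2 [A3 [A4 [A5 A6]]]]].
    destruct (H2 z Hz) as [B1 [B2 [B3 [B4 [B5 B6]]]]].
    unfold is_pdx, is_pdy in *. refine (conj _ (conj _ (conj _ (conj _ (conj _ _))))); apply is_derive_RC_plus; assumption.
Qed.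

Lemma holo_C2_scal c g gx gy gxx gxy gyx gyy :
  holo_C2 g gx gy gxx gxy gyx gyy ->
  holo_C2 (fun z => Cmult c (g z)) (fun z => Cmult c (gx z)) (fun z => Cmult c (gy z))
       (fun z => Cmult c (gxx z)) (fun z => Cmult c (gxy z)) (fun z => Cmult c (gyx z))
       (fun z => Cmult c (gyy z)).
Proof.
  intros [G1 [G2 [G3 [G4 [G5 [G6 [G7 [G8 G9]]]]]]]].
  refine (conj _ (conj _ (conj _ (conj _ (conj _ (conj _ (conj _ (conj _ _))))))));
    try (apply cont_on_cdisc_scal; assumption).
  - intros z Hz. apply is_derive_CC_Cmult_l; auto.
  - intros z Hz. destruct (G2 z Hz) as [A1 [A2 [A3 [A4 [A5 A6]]]]].
    unfold is_pdx, is_pdy in *. refine (conj _ (conj _ (conj _ (conj _ (conj _ _))))); apply is_derive_RC_Cmult_l; assumption.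
Qed.

Lemma holo_C2_const (c : CC) :
  holo_C2 (fun _ => c) (fun _ => RtoC 0) (fun _ => RtoC 0) (fun _ => RtoC 0)
          (fun _ => RtoC 0) (fun _ => RtoC 0) (fun _ => RtoC 0).
Proof.
  refine (conj _ (conj _ (conj _ (conj _ (conj _ (conj _ (conj _ (conj _ _))))))));
    try apply cont_on_cdisc_const.
  - intros. apply is_derive_CC_const.
  - intros. unfold is_pdx, is_pdy. refine (conj _ (conj _ (conj _ (conj _ (conj _ _))))); apply is_derive_RC_const.
Qed.

Lemma holo_C2_of_C2_on_cdisc (g : CC -> CC) :
  (forall x, udisc x -> ex_derive g x) -> C2_on_cdisc g ->
  exists gx gy gxx gxy gyx gyy, holo_C2 g gx gy gxx gxy gyx gyy.
Proof.
  intros Hd [gx [gy [gxx [gxy [gyx [gyy [Hp Hc]]]]]]].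
  exists gx, gy, gxx, gxy, gyx, gyy. split; [|split; [exact Hp | exact Hc]].
  intros z Hz. destruct (Hd z Hz) as [l Hl].
  destruct (is_derive_pdx_pdy g z l Hl) as [Hx _]. destruct (Hp z Hz) as [Hx' _].
  unfold is_pdx in Hx, Hx'. rewrite <- (is_derive_RC_unique _ _ _ _ Hx Hx'). exact Hl.
Qed.

Lemma holo_C2_lincomb (f : CC -> nat -> CC) (c : nat -> CC) n :
  (forall i, (i < n)%nat -> exists gx gy gxx gxy gyx gyy, holo_C2 (fun z => f z i) gx gy gxx gxy gyx gyy) ->
  exists gx gy gxx gxy gyx gyy,
    holo_C2 (fun z => csum n (fun i => Cmult (c i) (f z i))) gx gy gxx gxy gyx gyy.
Proof.
  induction n as [|n IH]; intros H.
  - eexists _, _, _, _, _, _. apply (holo_C2_const (RtoC 0)).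
  - destruct IH as [gx [gy [gxx [gxy [gyx [gyy HG]]]]]]; [intros; apply H; lia|].
    destruct (H n ltac:(lia)) as [hx [hy [hxx [hxy [hyx [hyy HH]]]]]].
    eexists _, _, _, _, _, _. exact (holo_C2_plus _ _ _ _ _ _ _ _ _ _ _ _ _ _ HG (holo_C2_scal (c n) _ _ _ _ _ _ _ HH)).
Qed.

Lemma udisc_segment xi D s t : cudisc xi -> udisc (Cplus xi (Cmult (RtoC s) D)) -> 0 < t <= s ->
  udisc (Cplus xi (Cmult (RtoC t) D)).
Proof.
  unfold cudisc, udisc. intros Hx Hz Ht. set (lam := t / s).
  assert (Hl : 0 < lam <= 1).
  { unfold lam. split; [apply Rdiv_lt_0_compat; lra|].
    apply Rmult_le_reg_r with s; [lra|]. unfold Rdiv. rewrite Rmult_assoc, Rinv_l; lra. }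
  replace (Cplus xi (Cmult (RtoC t) D))
    with (Cplus (Cmult (RtoC (1 - lam)) xi) (Cmult (RtoC lam) (Cplus xi (Cmult (RtoC s) D)))).
  2: { unfold lam. rewrite RtoC_minus, RtoC_div by lra. field. intro E. apply RtoC_inj in E. lra. }
  eapply Rle_lt_trans; [apply Cmod_triangle|]. rewrite !Cmod_RtoC_mult, !Rabs_right by lra.
  assert ((1 - lam) * Cmod xi <= 1 - lam) by (apply Rmult_le_compat_l with (r := 1 - lam) in Hx; lra).
  assert (lam * Cmod (Cplus xi (Cmult (RtoC s) D)) < lam) by (apply Rmult_lt_compat_l with (r := lam) in Hz; lra).
  lra.
Qed.

Lemma cont_on_segment_of_cdisc (G : CC -> CC) xi D a b : cont_on_cdisc G ->
  (forall t, a <= t <= b -> cudisc (Cplus xi (Cmult (RtoC t) D))) ->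
  cont_on_segment (fun t => G (Cplus xi (Cmult (RtoC t) D))) a b.
Proof.
  intros HG Hseg t Ht eps He. pose proof (Cmod_ge_0 D).
  destruct (HG _ (Hseg t Ht) eps He) as [d [Hd Hclose]].
  exists (d / (Cmod D + 1)). split; [apply Rdiv_lt_0_compat; lra|].
  intros t' Ht' Htt. apply Hclose; [apply Hseg; auto|].
  replace (Cminus (Cplus xi (Cmult (RtoC t') D)) (Cplus xi (Cmult (RtoC t) D)))
    with (Cmult (RtoC (t' - t)) D) by (rewrite RtoC_minus; ring).
  rewrite Cmod_RtoC_mult. pose proof (Rabs_pos (t' - t)).
  assert (Rabs (t' - t) * (Cmod D + 1) < d).
  { apply Rmult_lt_reg_r with (/ (Cmod D + 1)); [apply Rinv_0_lt_compat; lra|].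
    rewrite Rmult_assoc, Rinv_r by lra. lra. }
  nra.
Qed.

Section SegmentTaylor.

Variables g gx gy gxx gxy gyx gyy : CC -> CC.
Hypothesis HG : holo_C2 g gx gy gxx gxy gyx gyy.
Variables (xi D : CC).
Hypothesis Hxi : cudisc xi.

Let seg (t : R) : CC := Cplus xi (Cmult (RtoC t) D).

Lemma segment_cdisc s : udisc (seg s) -> forall t, 0 <= t <= s -> cudisc (seg t).
Proof.
  intros Hs t Ht. destruct (Req_dec t 0) as [->|Ht0].
  - unfold seg. replace (Cplus xi (Cmult (RtoC 0) D)) with xi by cext. exact Hxi.
  - apply udisc_cudisc, (udisc_segment xi D s); [exact Hxi | exact Hs | lra].
Qed.

Lemma pdx_increment_along_segment :
  exists M s0, 0 <= M /\ 0 < s0 /\ forall s, 0 < s <= s0 -> udisc (seg s) ->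
    Cmod (Cminus (gx (seg s)) (gx xi)) <= 2 * M * s.
Proof.
  destruct HG as [_ [G2 [_ [_ [_ [Gxx [Gxy _]]]]]]].
  destruct (Gxx xi Hxi 1 ltac:(lra)) as [r1 [Hr1 H1]].
  destruct (Gxy xi Hxi 1 ltac:(lra)) as [r2 [Hr2 H2]].
  pose proof (Cmod_ge_0 D). pose proof (Cmod_ge_0 (gxx xi)). pose proof (Cmod_ge_0 (gxy xi)).
  set (M := Cmod D * (Cmod (gxx xi) + Cmod (gxy xi) + 2)).
  set (rr := Rmin r1 r2). assert (Hrr : 0 < rr) by (apply Rmin_pos; auto).
  exists M, (rr / (Cmod D + 1) / 2).
  split; [unfold M; nra|]. split; [apply Rdiv_lt_0_compat; [apply Rdiv_lt_0_compat|]; lra|].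
  intros s Hs Hz.
  assert (Hnear : forall t, 0 <= t <= s -> Cmod (Cminus (seg t) xi) < rr).
  { intros t Ht. unfold seg. replace (Cminus (Cplus xi (Cmult (RtoC t) D)) xi) with (Cmult (RtoC t) D) by ring.
    rewrite Cmod_RtoC_mult, Rabs_right by lra.
    assert (s * (Cmod D + 1) <= rr / 2).
    { destruct Hs as [_ Hs]. apply Rmult_le_compat_r with (r := Cmod D + 1) in Hs; [|lra].
      replace (rr / (Cmod D + 1) / 2 * (Cmod D + 1)) with (rr / 2) in Hs by (field; lra). lra. }
    nra. }
  assert (Hbound : forall F, cont_on_cdisc F -> (forall w, cudisc w -> Cmod (Cminus w xi) < rr ->
            Cmod (Cminus (F w) (F xi)) < 1) -> forall t, 0 <= t <= s -> Cmod (F (seg t)) <= Cmod (F xi) + 1).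
  { intros F _ HF t Ht. specialize (HF (seg t) (segment_cdisc s Hz t Ht) (Hnear t Ht)).
    pose proof (Cmod_reverse_triangle (F (seg t)) (F xi)). lra. }
  pose proof (MVT_bound_C (fun t => gx (seg t))
    (fun t => Cplus (Cmult (RtoC (Re D)) (gxx (seg t))) (Cmult (RtoC (Im D)) (gxy (seg t))))
    0 s (RtoC 0) M ltac:(lra)) as HH.
  cbv beta in HH. replace (seg 0) with xi in HH by (unfold seg; cext). rewrite Rminus_0_r in HH.
  replace (Cminus (Cminus (gx (seg s)) (gx xi)) (Cmult (RtoC s) (RtoC 0)))
    with (Cminus (gx (seg s)) (gx xi)) in HH by ring.
  apply HH.
  - intros t Ht. apply is_derive_line_shift, is_derive_direction.
    + apply (udisc_segment xi D s); [exact Hxi | exact Hz | lra].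
    + intros w Hw. apply (G2 w Hw).
    + intros w Hw. apply (G2 w Hw).
    + exact Gxy.
  - apply cont_on_segment_of_cdisc; [apply HG|]. intros t Ht. apply (segment_cdisc s Hz t Ht).
  - intros t Ht.
    replace (Cminus (Cplus (Cmult (RtoC (Re D)) (gxx (seg t))) (Cmult (RtoC (Im D)) (gxy (seg t)))) (RtoC 0))
      with (Cplus (Cmult (RtoC (Re D)) (gxx (seg t))) (Cmult (RtoC (Im D)) (gxy (seg t)))) by ring.
    eapply Rle_trans; [apply Cmod_triangle|]. rewrite !Cmod_RtoC_mult.
    assert (A := Hbound gxx Gxx (fun w Hw Hwx => H1 w Hw ltac:(unfold rr in Hwx; pose proof (Rmin_l r1 r2); lra)) t ltac:(lra)).
    assert (B := Hbound gxy Gxy (fun w Hw Hwx => H2 w Hw ltac:(unfold rr in Hwx; pose proof (Rmin_r r1 r2); lra)) t ltac:(lra)).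
    pose proof (re_le_Cmod D). pose proof (Rabs_Im_le_Cmod D).
    assert (Rabs (Re D) * Cmod (gxx (seg t)) <= Cmod D * (Cmod (gxx xi) + 1))
      by (apply Rmult_le_compat; auto; apply Rabs_pos || apply Cmod_ge_0).
    assert (Rabs (Im D) * Cmod (gxy (seg t)) <= Cmod D * (Cmod (gxy xi) + 1))
      by (apply Rmult_le_compat; auto; apply Rabs_pos || apply Cmod_ge_0).
    unfold M. nra.
Qed.

Lemma first_order_taylor_along_segment :
  exists K s0, 0 <= K /\ 0 < s0 /\ forall s, 0 < s <= s0 -> udisc (seg s) ->
    Cmod (Cminus (Cminus (g (seg s)) (g xi)) (Cmult (RtoC s) (Cmult D (gx xi)))) <= K * s ^ 2.
Proof.
  destruct pdx_increment_along_segment as [M [s0 [HM [Hs0 HA]]]].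
  pose proof (Cmod_ge_0 D).
  exists (4 * Cmod D * M), s0. split; [nra|]. split; [exact Hs0|]. intros s Hs Hz.
  pose proof (MVT_bound_C (fun t => g (seg t)) (fun t => Cmult D (gx (seg t)))
                0 s (Cmult D (gx xi)) (Cmod D * (2 * M * s)) ltac:(lra)) as HH.
  cbv beta in HH. replace (seg 0) with xi in HH by (unfold seg; cext).
  rewrite Rminus_0_r in HH. eapply Rle_trans; [apply HH|].
  - intros t Ht. apply is_derive_along_line, (proj1 HG).
    apply (udisc_segment xi D s); [exact Hxi | exact Hz | lra].
  - apply cont_on_segment_of_cdisc; [apply HG|]. intros t Ht. apply (segment_cdisc s Hz t Ht).
  - intros t Ht.
    replace (Cminus (Cmult D (gx (seg t))) (Cmult D (gx xi))) with (Cmult D (Cminus (gx (seg t)) (gx xi))) by ring.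
    rewrite Cmod_mult. apply Rmult_le_compat_l; [lra|].
    eapply Rle_trans; [apply HA; [lra | apply (udisc_segment xi D s); [exact Hxi | exact Hz | lra]]|]. nra.
  - lra.
Qed.

Lemma lipschitz_along_segment :
  exists L s0, 0 <= L /\ 0 < s0 /\ forall s, 0 < s <= s0 -> udisc (seg s) ->
     Cmod (Cminus (g (seg s)) (g xi)) <= L * s.
Proof.
  destruct first_order_taylor_along_segment as [K [s0 [HK [Hs0 HT]]]].
  pose proof (Cmod_ge_0 (Cmult D (gx xi))).
  exists (Cmod (Cmult D (gx xi)) + K), (Rmin s0 1).
  split; [lra|]. split; [apply Rmin_pos; lra|]. intros s Hs Hz.
  pose proof (Rmin_l s0 1). pose proof (Rmin_r s0 1).
  specialize (HT s ltac:(lra) Hz).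
  replace (Cminus (g (seg s)) (g xi)) with
    (Cplus (Cminus (Cminus (g (seg s)) (g xi)) (Cmult (RtoC s) (Cmult D (gx xi))))
           (Cmult (RtoC s) (Cmult D (gx xi)))) by ring.
  eapply Rle_trans; [apply Cmod_triangle|]. rewrite Cmod_RtoC_mult, Rabs_right by lra.
  assert (K * s ^ 2 <= K * s) by (apply Rmult_le_compat_l; nra). nra.
Qed.

End SegmentTaylor.

(** * The Hopf lemma *)

Lemma locally_0_of_Rabs (P : R -> Prop) r : 0 < r -> (forall t, Rabs t < r -> P t) -> locally 0 P.
Proof.
  intros Hr H. exists (mkposreal r Hr). intros y Hy. apply H.
  change (Rabs (y - 0) < r) in Hy. rewrite Rminus_0_r in Hy. exact Hy.
Qed.

Lemma Cmod_Ci : Cmod Ci = 1.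
Proof. unfold Cmod. rewrite <- sqrt_1. f_equal. simpl. ring. Qed.

Lemma holo_C2_laplacian_zero N Nx Ny Nxx Nxy Nyx Nyy w :
  holo_C2 N Nx Ny Nxx Nxy Nyx Nyy -> udisc w -> Cplus (Nxx w) (Nyy w) = RtoC 0.
Proof.
  intros [G1 [G2 [_ [_ [_ [_ [G7 [G8 _]]]]]]]] Hw.
  assert (Hy : forall z, udisc z -> Ny z = Cmult Ci (Nx z)).
  { intros z Hz. destruct (is_derive_pdx_pdy N z (Nx z) (G1 z Hz)) as [_ H1].
    destruct (G2 z Hz) as [_ [H2 _]]. exact (is_derive_RC_unique _ _ _ _ H2 H1). }
  set (r := 1 - Cmod w). assert (Hr : 0 < r) by (unfold r, udisc in *; lra).
  destruct (G2 w Hw) as [_ [_ [Hxx [Hxy [Hyx Hyy]]]]]. unfold is_pdx, is_pdy in *.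
  assert (Hyx' : Nyx w = Cmult Ci (Nxx w)).
  { apply (is_derive_RC_unique _ _ _ _ Hyx).
    apply (is_derive_ext_loc (fun t : R => Cmult Ci (Nx (Cplus w (RtoC t))))).
    - apply (locally_0_of_Rabs _ r Hr). intros t Ht. rewrite Hy; [reflexivity|].
      apply (udisc_near w Hw). replace (Cminus (Cplus w (RtoC t)) w) with (RtoC t) by ring.
      rewrite Cmod_R. exact Ht.
    - apply is_derive_RC_Cmult_l, Hxx. }
  assert (Hyy' : Nyy w = Cmult Ci (Nxy w)).
  { apply (is_derive_RC_unique _ _ _ _ Hyy).
    apply (is_derive_ext_loc (fun t : R => Cmult Ci (Nx (Cplus w (Cmult (RtoC t) Ci))))).
    - apply (locally_0_of_Rabs _ r Hr). intros t Ht. rewrite Hy; [reflexivity|].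
      apply (udisc_near w Hw). replace (Cminus (Cplus w (Cmult (RtoC t) Ci)) w) with (Cmult (RtoC t) Ci) by ring.
      rewrite Cmod_RtoC_mult, Cmod_Ci. unfold r in Ht. lra.
    - apply is_derive_RC_Cmult_l, Hxy. }
  assert (Hcl : Nxy w = Nyx w).
  { apply (pdxy_eq_pdyx N Nx Ny Nxy Nyx w Hw); auto; intros z Hz; apply (G2 z Hz). }
  rewrite Hyy', Hcl, Hyx'. replace (Cmult Ci (Cmult Ci (Nxx w))) with (Cmult (Cmult Ci Ci) (Nxx w)) by ring.
  replace (Cmult Ci Ci) with (Copp (RtoC 1)) by cext. ring.
Qed.

(* Hopf's barrier [exp (-5 |z|^2) - exp (-5)]: it vanishes on the unit circle,
   its Laplacian [(100 |z|^2 - 20) exp (-5 |z|^2)] is positive for [|z| > 1/2],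
   and its inward radial derivative at the circle is [10 exp (-5) > 0]. *)
Definition barrier (z : CC) : R := exp (-5 * (Re z ^ 2 + Im z ^ 2)) - exp (-5).
Definition barrier_x (z : CC) : R := -10 * Re z * exp (-5 * (Re z ^ 2 + Im z ^ 2)).
Definition barrier_y (z : CC) : R := -10 * Im z * exp (-5 * (Re z ^ 2 + Im z ^ 2)).
Definition barrier_xx (z : CC) : R := (100 * Re z ^ 2 - 10) * exp (-5 * (Re z ^ 2 + Im z ^ 2)).
Definition barrier_yy (z : CC) : R := (100 * Im z ^ 2 - 10) * exp (-5 * (Re z ^ 2 + Im z ^ 2)).

Ltac exp_arg_normalize T := repeat match goal with |- context [exp (-5 * ?X)] =>
     lazymatch X with T => fail | _ => replace X with T by ring end end.

Lemma barrier_pdx w t :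
  is_derive (fun s => barrier (Cplus w (RtoC s))) t (barrier_x (Cplus w (RtoC t))).
Proof.
  unfold barrier, barrier_x. destruct w as [a b].
  apply (is_derive_ext (fun s => exp (-5 * ((a + s) ^ 2 + b ^ 2)) - exp (-5))).
  { intros s. replace (Cplus (a, b) (RtoC s)) with ((a + s, b) : CC) by cext. reflexivity. }
  replace (Re (Cplus (a, b) (RtoC t))) with (a + t) by (unfold Re; simpl; ring).
  replace (Im (Cplus (a, b) (RtoC t))) with b by (unfold Im; simpl; ring).
  auto_derive; [auto|]. exp_arg_normalize ((a + t) ^ 2 + b ^ 2). ring.
Qed.

Lemma barrier_x_pdx w : is_derive (fun s => barrier_x (Cplus w (RtoC s))) 0 (barrier_xx w).
Proof.
  unfold barrier_x, barrier_xx. destruct w as [a b].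
  apply (is_derive_ext (fun s => -10 * (a + s) * exp (-5 * ((a + s) ^ 2 + b ^ 2)))).
  { intros s. replace (Cplus (a, b) (RtoC s)) with ((a + s, b) : CC) by cext. reflexivity. }
  unfold Re, Im; simpl. auto_derive; [auto|].
  exp_arg_normalize ((a + 0) ^ 2 + b ^ 2). replace (a + 0) with a by ring. ring.
Qed.

Lemma barrier_pdy w t :
  is_derive (fun s => barrier (Cplus w (Cmult (RtoC s) Ci))) t (barrier_y (Cplus w (Cmult (RtoC t) Ci))).
Proof.
  unfold barrier, barrier_y. destruct w as [a b].
  apply (is_derive_ext (fun s => exp (-5 * (a ^ 2 + (b + s) ^ 2)) - exp (-5))).
  { intros s. replace (Cplus (a, b) (Cmult (RtoC s) Ci)) with ((a, b + s) : CC) by cext. reflexivity. }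
  replace (Re (Cplus (a, b) (Cmult (RtoC t) Ci))) with a by (unfold Re; simpl; ring).
  replace (Im (Cplus (a, b) (Cmult (RtoC t) Ci))) with (b + t) by (unfold Im; simpl; ring).
  auto_derive; [auto|]. exp_arg_normalize (a ^ 2 + (b + t) ^ 2). ring.
Qed.

Lemma barrier_y_pdy w : is_derive (fun s => barrier_y (Cplus w (Cmult (RtoC s) Ci))) 0 (barrier_yy w).
Proof.
  unfold barrier_y, barrier_yy. destruct w as [a b].
  apply (is_derive_ext (fun s => -10 * (b + s) * exp (-5 * (a ^ 2 + (b + s) ^ 2)))).
  { intros s. replace (Cplus (a, b) (Cmult (RtoC s) Ci)) with ((a, b + s) : CC) by cext. reflexivity. }
  unfold Re, Im; simpl. auto_derive; [auto|].
  exp_arg_normalize (a ^ 2 + (b + 0) ^ 2). replace (b + 0) with b by ring. ring.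
Qed.

Lemma exp_le_1 x : x <= 0 -> exp x <= 1.
Proof.
  intros Hx. rewrite <- exp_0. destruct (Req_dec x 0) as [->|]; [lra|].
  left. apply exp_increasing. lra.
Qed.

Lemma exp_opp_lipschitz_ordered u v : 0 <= u <= v -> Rabs (exp (- u) - exp (- v)) <= Rabs (u - v).
Proof.
  intros Huv.
  assert (E : exp (- v) = exp (- u) * exp (- (v - u))) by (rewrite <- exp_plus; f_equal; ring).
  pose proof (exp_ineq1_le (- (v - u))). pose proof (exp_pos (- u)). pose proof (exp_pos (- (v - u))).
  assert (exp (- u) <= 1) by (apply exp_le_1; lra).
  assert (exp (- (v - u)) <= 1) by (apply exp_le_1; lra).
  rewrite E, Rabs_right, Rabs_left1 by nra. nra.
Qed.

Lemma exp_opp_lipschitz u v : 0 <= u -> 0 <= v -> Rabs (exp (- u) - exp (- v)) <= Rabs (u - v).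
Proof.
  intros Hu Hv. destruct (Rle_lt_dec u v); [apply exp_opp_lipschitz_ordered; lra|].
  rewrite Rabs_minus_sym, (Rabs_minus_sym u). apply exp_opp_lipschitz_ordered; lra.
Qed.

Lemma barrier_lipschitz z w : Cmod z <= 1 -> Cmod w <= 1 ->
  Rabs (barrier w - barrier z) <= 10 * Cmod (Cminus w z).
Proof.
  intros Hz Hw. unfold barrier.
  replace (exp (-5 * (Re w ^ 2 + Im w ^ 2)) - exp (-5) - (exp (-5 * (Re z ^ 2 + Im z ^ 2)) - exp (-5)))
    with (exp (- (5 * (Re w ^ 2 + Im w ^ 2))) - exp (- (5 * (Re z ^ 2 + Im z ^ 2)))).
  2: { replace (- (5 * (Re w ^ 2 + Im w ^ 2))) with (-5 * (Re w ^ 2 + Im w ^ 2)) by ring.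
       replace (- (5 * (Re z ^ 2 + Im z ^ 2))) with (-5 * (Re z ^ 2 + Im z ^ 2)) by ring. ring. }
  eapply Rle_trans; [apply exp_opp_lipschitz; nra|].
  rewrite <- !Cmod2_alt.
  replace (5 * Cmod w ^ 2 - 5 * Cmod z ^ 2) with (5 * ((Cmod w + Cmod z) * (Cmod w - Cmod z))) by ring.
  rewrite !Rabs_mult, (Rabs_right 5) by lra.
  pose proof (Rabs_Cmod_minus_le w z). pose proof (Cmod_ge_0 z). pose proof (Cmod_ge_0 w).
  rewrite (Rabs_right (Cmod w + Cmod z)) by lra.
  pose proof (Rabs_pos (Cmod w - Cmod z)). nra.
Qed.

Lemma barrier_lt_1 z : barrier z < 1.
Proof.
  unfold barrier. pose proof (exp_pos (-5)).
  assert (exp (-5 * (Re z ^ 2 + Im z ^ 2)) <= 1) by (apply exp_le_1; nra).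
  lra.
Qed.

Lemma barrier_unit_circle z : Cmod z = 1 -> barrier z = 0.
Proof.
  intros H. unfold barrier. rewrite <- Cmod2_alt, H. replace (-5 * 1 ^ 2) with (-5) by ring. ring.
Qed.

Lemma barrier_laplacian_pos z : 1 / 2 < Cmod z -> 0 < barrier_xx z + barrier_yy z.
Proof.
  intros H. unfold barrier_xx, barrier_yy.
  assert (Cmod z ^ 2 > 1 / 4) by nra. rewrite Cmod2_alt in H0.
  pose proof (exp_pos (-5 * (Re z ^ 2 + Im z ^ 2))). nra.
Qed.

Lemma barrier_radial_lower_bound (xi : CC) s : Cmod xi = 1 -> 0 <= s <= 1 ->
  exp (-5) * 5 * s <= barrier (Cmult (RtoC (1 - s)) xi).
Proof.
  intros Hxi Hs. unfold barrier. rewrite <- Cmod2_alt, Cmod_RtoC_mult, Hxi, Rmult_1_r.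
  rewrite Rabs_right by lra.
  replace (-5 * (1 - s) ^ 2) with (-5 + 5 * (2 * s - s ^ 2)) by ring. rewrite exp_plus.
  pose proof (exp_ineq1_le (5 * (2 * s - s ^ 2))). pose proof (exp_pos (-5)).
  assert (1 + 5 * s <= exp (5 * (2 * s - s ^ 2))) by nra.
  assert (exp (-5) * (1 + 5 * s) <= exp (-5) * exp (5 * (2 * s - s ^ 2))) by (apply Rmult_le_compat_l; lra).
  lra.
Qed.

Lemma local_max_line_second_derivative (A A1 : R -> CC) (B B1 : R -> R) a2 b2 eps r : 0 < r ->
  (forall t, Rabs t < r -> Re (A t) + eps * B t <= Re (A 0) + eps * B 0) ->
  (forall t, Rabs t < r -> is_derive A t (A1 t)) -> (forall t, Rabs t < r -> is_derive B t (B1 t)) ->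
  is_derive A1 0 a2 -> is_derive B1 0 b2 -> Re a2 + eps * b2 <= 0.
Proof.
  intros Hr Hmax HA HB HA1 HB1.
  apply (local_max_second_derivative_nonpos (fun t => Re (A t) + eps * B t)
           (fun t => Re (A1 t) + eps * B1 t) r); [exact Hr | exact Hmax | |].
  - intros t Ht. apply (is_derive_plus (fun t => Re (A t)) (fun t => eps * B t)).
    + apply is_derive_RC_Re, HA, Ht.
    + apply is_derive_scal, HB, Ht.
  - apply (is_derive_plus (fun t => Re (A1 t)) (fun t => eps * B1 t)).
    + apply is_derive_RC_Re, HA1.
    + apply is_derive_scal, HB1.
Qed.

Section Hopf.

Variables N Nx Ny Nxx Nxy Nyx Nyy : CC -> CC.
Hypothesis HN : holo_C2 N Nx Ny Nxx Nxy Nyx Nyy.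
Hypothesis Re_N_le_1 : forall z, cudisc z -> Re (N z) <= 1.
Hypothesis Re_N_lt_1 : forall z, udisc z -> Re (N z) < 1.

Let comparison (eps : R) (z : CC) : R := Re (N z) - 1 + eps * barrier z.

Lemma Re_N_rel_continuous r1 r2 : r2 <= 1 -> rel_continuous_on (annulus r1 r2) (fun z => Re (N z)).
Proof.
  intros Hr2 z Hz eps He. destruct HN as [_ [_ [HcN _]]].
  destruct (HcN z ltac:(unfold cudisc, annulus in *; lra) eps He) as [d [Hd H]].
  exists d. split; [exact Hd|]. intros w Hw Hwz. rewrite <- Re_Cminus.
  eapply Rle_lt_trans; [apply re_le_Cmod | apply H; [unfold cudisc, annulus in *; lra | exact Hwz]].
Qed.

Lemma comparison_rel_continuous eps : 0 < eps ->
  rel_continuous_on (annulus (1 / 2) 1) (comparison eps).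
Proof.
  intros Heps z Hz e He.
  destruct (Re_N_rel_continuous (1 / 2) 1 ltac:(lra) z Hz (e / 2) ltac:(lra)) as [d [Hd H]].
  exists (Rmin d (e / (2 * (10 * eps + 1)))).
  split; [apply Rmin_pos; [exact Hd | apply Rdiv_lt_0_compat; lra]|].
  intros w Hw Hwz. specialize (H w Hw (Rlt_le_trans _ _ _ Hwz (Rmin_l _ _))).
  pose proof (barrier_lipschitz z w ltac:(unfold annulus in *; lra) ltac:(unfold annulus in *; lra)).
  assert (Hm : Cmod (Cminus w z) * (2 * (10 * eps + 1)) <= e).
  { pose proof (Rmin_r d (e / (2 * (10 * eps + 1)))).
    apply Rmult_le_reg_r with (/ (2 * (10 * eps + 1))); [apply Rinv_0_lt_compat; lra|].
    rewrite Rmult_assoc, Rinv_r by lra. lra. }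
  unfold comparison.
  replace (Re (N w) - 1 + eps * barrier w - (Re (N z) - 1 + eps * barrier z))
    with ((Re (N w) - Re (N z)) + eps * (barrier w - barrier z)) by ring.
  eapply Rle_lt_trans; [apply Rabs_triang|]. rewrite Rabs_mult, (Rabs_right eps) by lra.
  pose proof (Cmod_ge_0 (Cminus w z)). nra.
Qed.

(* [Re N] is harmonic and the barrier strictly subharmonic in the annulus, so
   the second derivative tests in the two coordinate directions contradict. *)
Lemma comparison_no_interior_max eps zs : 0 < eps -> 1 / 2 < Cmod zs < 1 ->
  ~ (forall z, annulus (1 / 2) 1 z -> comparison eps z <= comparison eps zs).
Proof.
  intros Heps Hin Hmax.
  pose proof (Rmin_l (Cmod zs - 1 / 2) (1 - Cmod zs)). pose proof (Rmin_r (Cmod zs - 1 / 2) (1 - Cmod zs)).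
  set (r := Rmin (Cmod zs - 1 / 2) (1 - Cmod zs)) in *. assert (Hr : 0 < r) by (apply Rmin_pos; lra).
  assert (Hnear : forall D t, Cmod D = 1 -> Rabs t < r -> 1 / 2 < Cmod (Cplus zs (Cmult (RtoC t) D)) < 1).
  { intros D t HD Ht. pose proof (Rabs_Cmod_minus_le (Cplus zs (Cmult (RtoC t) D)) zs) as Hd.
    replace (Cminus (Cplus zs (Cmult (RtoC t) D)) zs) with (Cmult (RtoC t) D) in Hd by ring.
    rewrite Cmod_RtoC_mult, HD in Hd. apply Rabs_le_between in Hd. lra. }
  assert (Hx : forall t, Rabs t < r -> 1 / 2 < Cmod (Cplus zs (RtoC t)) < 1).
  { intros t Ht. rewrite <- (Cmult_1_r (RtoC t)). apply Hnear; [apply Cmod_1 | exact Ht]. }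
  assert (Hy : forall t, Rabs t < r -> 1 / 2 < Cmod (Cplus zs (Cmult (RtoC t) Ci)) < 1)
    by (intros t Ht; apply Hnear; [apply Cmod_Ci | exact Ht]).
  assert (Hzs : udisc zs) by (unfold udisc; lra).
  destruct HN as [_ [G2 _]].
  assert (Qx : Re (Nxx zs) + eps * barrier_xx zs <= 0).
  { apply (local_max_line_second_derivative (fun t => N (Cplus zs (RtoC t))) (fun t => Nx (Cplus zs (RtoC t)))
             (fun t => barrier (Cplus zs (RtoC t))) (fun t => barrier_x (Cplus zs (RtoC t))) _ _ eps r Hr).
    - intros t Ht. replace (Cplus zs (RtoC 0)) with zs by cext.
      pose proof (Hmax (Cplus zs (RtoC t)) ltac:(unfold annulus; specialize (Hx t Ht); lra)).
      unfold comparison in *. lra.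
    - intros t Ht. apply is_pdx_horizontal, G2. unfold udisc. specialize (Hx t Ht). lra.
    - intros t Ht. apply barrier_pdx.
    - apply (G2 zs Hzs).
    - apply barrier_x_pdx. }
  assert (Qy : Re (Nyy zs) + eps * barrier_yy zs <= 0).
  { apply (local_max_line_second_derivative (fun t => N (Cplus zs (Cmult (RtoC t) Ci)))
             (fun t => Ny (Cplus zs (Cmult (RtoC t) Ci))) (fun t => barrier (Cplus zs (Cmult (RtoC t) Ci)))
             (fun t => barrier_y (Cplus zs (Cmult (RtoC t) Ci))) _ _ eps r Hr).
    - intros t Ht. replace (Cplus zs (Cmult (RtoC 0) Ci)) with zs by cext.
      pose proof (Hmax (Cplus zs (Cmult (RtoC t) Ci)) ltac:(unfold annulus; specialize (Hy t Ht); lra)).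
      unfold comparison in *. lra.
    - intros t Ht. apply is_pdy_vertical, G2. unfold udisc. specialize (Hy t Ht). lra.
    - intros t Ht. apply barrier_pdy.
    - apply (G2 zs Hzs).
    - apply barrier_y_pdy. }
  assert (HL : Re (Nxx zs) + Re (Nyy zs) = 0).
  { change (Re (Cplus (Nxx zs) (Nyy zs)) = 0).
    rewrite (holo_C2_laplacian_zero N Nx Ny Nxx Nxy Nyx Nyy zs HN Hzs). reflexivity. }
  pose proof (barrier_laplacian_pos zs ltac:(lra)). nra.
Qed.

Lemma comparison_nonpos : exists eps, 0 < eps /\
  forall z, annulus (1 / 2) 1 z -> comparison eps z <= 0.
Proof.
  destruct (annulus_attains_max (fun z => Re (N z)) (1 / 2) (1 / 2) ltac:(lra)
              (Re_N_rel_continuous (1 / 2) (1 / 2) ltac:(lra))) as [z1 [Hz1 Hmax1]].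
  assert (Hz1d : Re (N z1) < 1) by (apply Re_N_lt_1; unfold udisc, annulus in *; lra).
  set (eps := (1 - Re (N z1)) / 2). assert (Heps : 0 < eps) by (unfold eps; lra).
  exists eps. split; [exact Heps|].
  destruct (annulus_attains_max (comparison eps) (1 / 2) 1 ltac:(lra)
              (comparison_rel_continuous eps Heps)) as [zs [Hzs Hmax]].
  intros z Hz. eapply Rle_trans; [apply Hmax; exact Hz|].
  unfold annulus in Hzs. unfold comparison.
  destruct (Req_dec (Cmod zs) (1 / 2)) as [Einner|Einner].
  { assert (Re (N zs) <= Re (N z1)) by (apply Hmax1; unfold annulus; lra).
    pose proof (barrier_lt_1 zs). unfold eps in *. nra. }
  destruct (Req_dec (Cmod zs) 1) as [Eouter|Eouter].
  { rewrite (barrier_unit_circle zs Eouter).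
    assert (Re (N zs) <= 1) by (apply Re_N_le_1; unfold cudisc; lra). lra. }
  exfalso. apply (comparison_no_interior_max eps zs Heps ltac:(lra) Hmax).
Qed.

(* Along the radius towards [xi], [Re N] falls below [1] at least linearly, at
   rate [eps * 5 exp (-5)] by the comparison function, while its first order Taylor
   expansion has slope [- Re (xi Nx xi)]. *)
Lemma hopf_lemma xi : Cmod xi = 1 -> N xi = RtoC 1 -> 0 < Re (Cmult xi (Nx xi)).
Proof.
  intros Hxi HN1.
  destruct comparison_nonpos as [eps [Heps Hcmp]].
  destruct (first_order_taylor_along_segment N Nx Ny Nxx Nxy Nyx Nyy HN xi (Copp xi)
              ltac:(unfold cudisc; lra)) as [K [s0 [HK [Hs0 HT]]]].
  set (c := 5 * eps * exp (-5)). assert (Hc : 0 < c) by (unfold c; pose proof (exp_pos (-5)); nra).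
  pose proof (Rmin_l s0 (Rmin (1 / 2) (c / (2 * (K + 1))))).
  pose proof (Rmin_r s0 (Rmin (1 / 2) (c / (2 * (K + 1))))).
  pose proof (Rmin_l (1 / 2) (c / (2 * (K + 1)))). pose proof (Rmin_r (1 / 2) (c / (2 * (K + 1)))).
  set (s := Rmin s0 (Rmin (1 / 2) (c / (2 * (K + 1))))) in *.
  assert (Hs : 0 < s) by (unfold s; repeat apply Rmin_pos; try lra; apply Rdiv_lt_0_compat; lra).
  set (zz := Cplus xi (Cmult (RtoC s) (Copp xi))).
  assert (Ezz : zz = Cmult (RtoC (1 - s)) xi) by (unfold zz; rewrite RtoC_minus; ring).
  assert (Hmz : Cmod zz = 1 - s) by (rewrite Ezz, Cmod_RtoC_mult, Hxi, Rabs_right; lra).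
  specialize (HT s ltac:(lra) ltac:(unfold udisc; fold zz; lra)). fold zz in HT.
  pose proof (Hcmp zz ltac:(unfold annulus; lra)) as HW. unfold comparison in HW.
  pose proof (barrier_radial_lower_bound xi s Hxi ltac:(lra)) as Hb. rewrite <- Ezz in Hb.
  assert (HRe : Re (N zz) >= 1 - s * Re (Cmult xi (Nx xi)) - K * s ^ 2).
  { pose proof (re_le_Cmod (Cminus (Cminus (N zz) (N xi)) (Cmult (RtoC s) (Cmult (Copp xi) (Nx xi))))) as Hre.
    replace (Re (Cminus (Cminus (N zz) (N xi)) (Cmult (RtoC s) (Cmult (Copp xi) (Nx xi)))))
      with (Re (N zz) - 1 + s * Re (Cmult xi (Nx xi))) in Hre
      by (rewrite HN1; destruct (N zz), (Nx xi), xi; unfold Re; simpl; ring).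
    apply Rabs_le_between in Hre. lra. }
  assert (K * s <= c / 2).
  { assert (K * s <= K * (c / (2 * (K + 1)))) by (apply Rmult_le_compat_l; lra).
    assert (K * (c / (2 * (K + 1))) <= c / 2).
    { apply Rmult_le_reg_r with (2 * (K + 1)); [lra|].
      replace (K * (c / (2 * (K + 1))) * (2 * (K + 1))) with (K * c) by (field; lra).
      replace (c / 2 * (2 * (K + 1))) with (c * (K + 1)) by (field; lra). nra. }
    lra. }
  assert (eps * barrier zz >= c * s) by (unfold c; nra).
  nra.
Qed.

End Hopf.

Definition kdiff {X : Type} (z w : X) : kcomb X := [(RtoC 1, z); (Copp (RtoC 1), w)].

Lemma knormsq_kdiff {X} (K : X -> X -> CC) z w :
  knormsq K (kdiff z w) = Re (Cplus (Cminus (K z z) (K z w)) (Cminus (K w w) (K w z))).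
Proof.
  rewrite knormsq_kform. unfold kform, kdiff. rewrite !lsum_cons, !lsum_nil. simpl fst. simpl snd.
  replace (Cconj (RtoC 1)) with (RtoC 1) by cext.
  replace (Cconj (Copp (RtoC 1))) with (Copp (RtoC 1)) by cext.
  f_equal. ring.
Qed.

Lemma kform_kdiff {X} (K : X -> X -> CC) v z w :
  kform K v (kdiff z w) = Cminus (keval K v z) (keval K v w).
Proof.
  rewrite kform_keval. unfold kdiff. rewrite !lsum_cons, lsum_nil. simpl fst; simpl snd.
  replace (Cconj (RtoC 1)) with (RtoC 1) by cext.
  replace (Cconj (Copp (RtoC 1))) with (Copp (RtoC 1)) by cext. ring.
Qed.

Lemma kpair_kdiff {X} (h : X -> CC) z w : kpair (kdiff z w) h = Cminus (h z) (h w).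
Proof.
  unfold kpair, kdiff. rewrite !lsum_cons, lsum_nil. simpl fst; simpl snd.
  replace (Cconj (RtoC 1)) with (RtoC 1) by cext.
  replace (Cconj (Copp (RtoC 1))) with (Copp (RtoC 1)) by cext. ring.
Qed.

Lemma Cmod_Cinv_minus (a c : CC) : a <> RtoC 0 -> c <> RtoC 0 ->
  Cmod (Cminus (Cinv a) (Cinv c)) = Cmod (Cminus c a) / (Cmod a * Cmod c).
Proof.
  intros Ha Hc. replace (Cminus (Cinv a) (Cinv c)) with (Cdiv (Cminus c a) (Cmult a c)) by (field; auto).
  rewrite Cmod_div, Cmod_mult; [reflexivity|]. apply Cmult_neq_0; auto.
Qed.

Lemma Cinv_minus_bound (a c : CC) s C1 : 0 < s -> s <= Cmod a -> C1 * s <= 1 / 2 -> 0 <= C1 ->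
  Cmod (Cminus c a) <= C1 * s ^ 2 -> Cmod (Cminus (Cinv a) (Cinv c)) <= 2 * C1.
Proof.
  intros Hs Ha HC HC0 Hca.
  assert (Hc : s / 2 <= Cmod c) by (pose proof (Cmod_reverse_triangle a c); rewrite <- Cmod_opp in Hca;
    replace (Copp (Cminus c a)) with (Cminus a c) in Hca by ring; nra).
  rewrite Cmod_Cinv_minus.
  2: { intro E. rewrite E, Cmod_0 in Ha. lra. }
  2: { intro E. rewrite E, Cmod_0 in Hc. lra. }
  assert (0 < Cmod a * Cmod c) by (apply Rmult_lt_0_compat; lra).
  apply Rmult_le_reg_r with (Cmod a * Cmod c); [assumption|].
  unfold Rdiv. rewrite Rmult_assoc, Rinv_l, Rmult_1_r by lra.
  assert (s * (s / 2) <= Cmod a * Cmod c) by (apply Rmult_le_compat; lra).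
  nra.
Qed.

Lemma rsum_prod_bound d (a b : nat -> R) A B :
  (forall i, (i < d)%nat -> 0 <= a i <= A) -> (forall i, (i < d)%nat -> 0 <= b i <= B) ->
  rsum d (fun i => a i * b i) <= INR d * (A * B).
Proof.
  intros Ha Hb. rewrite <- rsum_const. apply rsum_le. intros i Hi.
  specialize (Ha i Hi). specialize (Hb i Hi). nra.
Qed.

Definition near_glued (d : nat) (p : nat -> CC) (s L K : R) (z : nat -> CC) : Prop :=
  (forall i, (i < d)%nat -> Cmod (Cminus (z i) (p i)) <= L * s) /\
  Cmod (Cminus (inner d z p) (RtoC (1 - s))) <= K * s ^ 2.

Section KernelDifference.

Variables (d : nat) (p : nat -> CC) (s L K : R).
Hypotheses (Hs : 0 < s) (HK : 0 <= K) (Hpp : inner d p p = RtoC 1).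

Let C1 := 2 * INR d * L ^ 2 + 2 * K.

Lemma one_minus_inner_self_ge z : near_glued d p s L K z -> C1 * s <= 1 / 2 ->
  s <= Cmod (Cminus (RtoC 1) (inner d z z)).
Proof.
  intros [Hz HNz] Hsmall. pose proof (pos_INR d).
  replace (inner d z z) with (Cminus (Cplus (Cplus (inner d (fun i => Cminus (z i) (p i))
      (fun i => Cminus (z i) (p i))) (inner d z p)) (Cconj (inner d z p))) (inner d p p))
    by (rewrite inner_conj, !inner_minus_l, !inner_minus_r; ring).
  rewrite Hpp.
  set (U := inner d (fun i => Cminus (z i) (p i)) (fun i => Cminus (z i) (p i))).
  set (Nz := inner d z p) in *.
  assert (HU : Re U <= INR d * (L * s) ^ 2).
  { unfold U. rewrite inner_diag_Re, <- rsum_const. apply rsum_le. intros i Hi.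
    pose proof (Cmod_ge_0 (Cminus (z i) (p i))). apply pow_incr. specialize (Hz i Hi). lra. }
  assert (HReN : Re Nz <= 1 - s + K * s ^ 2).
  { pose proof (re_le_Cmod (Cminus Nz (RtoC (1 - s)))) as H1.
    rewrite Re_Cminus, re_RtoC in H1. apply Rabs_le_between in H1. lra. }
  eapply Rle_trans; [|apply re_le_Cmod]. eapply Rle_trans; [|apply Rle_abs].
  replace (Re (Cminus (RtoC 1) (Cminus (Cplus (Cplus U Nz) (Cconj Nz)) (RtoC 1))))
    with (2 - Re U - 2 * Re Nz) by (destruct U, Nz; unfold Re; simpl; ring).
  assert (0 <= INR d * L ^ 2 * s) by (apply Rmult_le_pos; [apply Rmult_le_pos; [lra | apply pow2_ge_0] | lra]).
  assert (Hq : (INR d * L ^ 2 + 2 * K) * s <= 1 / 2) by (unfold C1 in Hsmall; lra).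
  assert (INR d * (L * s) ^ 2 + 2 * (K * s ^ 2) <= s / 2).
  { replace (INR d * (L * s) ^ 2 + 2 * (K * s ^ 2)) with (s * ((INR d * L ^ 2 + 2 * K) * s)) by ring.
    apply Rle_trans with (s * (1 / 2)); [apply Rmult_le_compat_l; lra | lra]. }
  lra.
Qed.

Lemma inner_cross_close z t : near_glued d p s L K z -> near_glued d p s L K t ->
  Cmod (Cminus (Cminus (RtoC 1) (inner d z t)) (Cminus (RtoC 1) (inner d z z))) <= C1 * s ^ 2.
Proof.
  intros [Hz HNz] [Ht HNt]. pose proof (pos_INR d).
  replace (Cminus (Cminus (RtoC 1) (inner d z t)) (Cminus (RtoC 1) (inner d z z)))
    with (Cplus (inner d (fun i => Cminus (z i) (p i)) (fun i => Cminus (z i) (t i)))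
                (Cconj (Cminus (inner d z p) (inner d t p))))
    by (rewrite Cminus_conj, !inner_conj, !inner_minus_l, !inner_minus_r; ring).
  eapply Rle_trans; [apply Cmod_triangle|]. rewrite Cmod_conj.
  assert (H1 : Cmod (inner d (fun i => Cminus (z i) (p i)) (fun i => Cminus (z i) (t i)))
               <= INR d * ((L * s) * (2 * L * s))).
  { eapply Rle_trans; [apply inner_bound|]. apply rsum_prod_bound.
    - intros i Hi. split; [apply Cmod_ge_0 | auto].
    - intros i Hi. split; [apply Cmod_ge_0|].
      replace (Cminus (z i) (t i)) with (Cminus (Cminus (z i) (p i)) (Cminus (t i) (p i))) by ring.
      unfold Cminus at 1. eapply Rle_trans; [apply Cmod_triangle|]. rewrite Cmod_opp.
      specialize (Hz i Hi). specialize (Ht i Hi). lra. }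
  assert (H2 : Cmod (Cminus (inner d z p) (inner d t p)) <= 2 * K * s ^ 2).
  { replace (Cminus (inner d z p) (inner d t p))
      with (Cminus (Cminus (inner d z p) (RtoC (1 - s))) (Cminus (inner d t p) (RtoC (1 - s)))) by ring.
    unfold Cminus at 1. eapply Rle_trans; [apply Cmod_triangle|]. rewrite Cmod_opp. lra. }
  unfold C1. nra.
Qed.

Lemma DA_kernel_difference_bound x y : near_glued d p s L K x -> near_glued d p s L K y ->
  C1 * s <= 1 / 2 ->
  Re (Cplus (Cminus (DA_kernel d x x) (DA_kernel d x y)) (Cminus (DA_kernel d y y) (DA_kernel d y x)))
   <= 4 * C1.
Proof.
  intros Hx Hy Hsmall. unfold DA_kernel. pose proof (pos_INR d).
  assert (HC1 : 0 <= C1) by (unfold C1; nra).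
  pose proof (Cinv_minus_bound _ _ s C1 Hs (one_minus_inner_self_ge x Hx Hsmall) Hsmall HC1
                (inner_cross_close x y Hx Hy)) as Hb1.
  pose proof (Cinv_minus_bound _ _ s C1 Hs (one_minus_inner_self_ge y Hy Hsmall) Hsmall HC1
                (inner_cross_close y x Hy Hx)) as Hb2.
  set (X1 := Cminus (Cinv (Cminus (RtoC 1) (inner d x x))) (Cinv (Cminus (RtoC 1) (inner d x y)))) in *.
  set (Y1 := Cminus (Cinv (Cminus (RtoC 1) (inner d y y))) (Cinv (Cminus (RtoC 1) (inner d y x)))) in *.
  change (Re (Cplus X1 Y1)) with (Re X1 + Re Y1).
  pose proof (re_le_Cmod X1). pose proof (re_le_Cmod Y1).
  pose proof (Rle_abs (Re X1)). pose proof (Rle_abs (Re Y1)). lra.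
Qed.

End KernelDifference.

(** * Approaching two glued boundary points *)

Lemma uniform_over_coordinates (P : nat -> R -> R -> Prop) n :
  (forall i L L' s s', P i L s -> L <= L' -> 0 < s' <= s -> P i L' s') ->
  (forall i, (i < n)%nat -> exists L s, 0 <= L /\ 0 < s /\ P i L s) ->
  exists L s, 0 <= L /\ 0 < s /\ forall i, (i < n)%nat -> P i L s.
Proof.
  intros Hm. induction n as [|n IH]; intros H.
  - exists 0, 1. split; [lra|]. split; [lra|]. intros; lia.
  - destruct IH as [L [s [HL [Hs HP]]]]; [intros; apply H; lia|].
    destruct (H n ltac:(lia)) as [L' [s' [HL' [Hs' HP']]]].
    pose proof (Rmax_l L L'). pose proof (Rmax_r L L'). pose proof (Rmin_l s s'). pose proof (Rmin_r s s').
    pose proof (Rmin_pos s s' Hs Hs').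
    exists (Rmax L L'), (Rmin s s'). split; [lra|]. split; [lra|]. intros i Hi.
    destruct (Nat.eq_dec i n) as [->|Hin].
    + eapply Hm; [exact HP' | lra | lra].
    + eapply Hm; [apply HP; lia | lra | lra].
Qed.

Lemma Re_Cinv_pos (g : CC) : 0 < Re g -> 0 < Re (Cinv g).
Proof.
  intros H. destruct g as [a b]. unfold Cinv, Re in *; simpl in *.
  apply Rdiv_lt_0_compat; [exact H | nra].
Qed.

(* Take [D = - 1 / a]. *)
Lemma inward_direction xi a : Cmod xi = 1 -> 0 < Re (Cmult xi a) ->
  exists D s1, Cmult D a = Copp (RtoC 1) /\ 0 < s1 /\
    forall s, 0 < s <= s1 -> udisc (Cplus xi (Cmult (RtoC s) D)).
Proof.
  intros Hxi Ha. set (w := Cinv (Cmult xi a)).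
  assert (Hw : 0 < Re w) by (apply Re_Cinv_pos; exact Ha).
  assert (Hxa : Cmult xi a <> RtoC 0) by (intro E; rewrite E, re_RtoC in Ha; lra).
  assert (Hxi0 : xi <> RtoC 0) by (intro E; apply Hxa; rewrite E; ring).
  assert (Ha0 : a <> RtoC 0) by (intro E; apply Hxa; rewrite E; ring).
  assert (Hwn : 0 < Cmod w ^ 2) by (rewrite Cmod2_alt; nra).
  exists (Copp (Cmult xi w)), (Re w / Cmod w ^ 2 / 2).
  split; [unfold w; field; auto|]. split; [apply Rdiv_lt_0_compat; [apply Rdiv_lt_0_compat|]; lra|].
  intros s [Hs Hs2]. unfold udisc. clearbody w.
  replace (Cplus xi (Cmult (RtoC s) (Copp (Cmult xi w)))) with (Cmult xi (Cminus (RtoC 1) (Cmult (RtoC s) w))) by ring.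
  rewrite Cmod_mult, Hxi, Rmult_1_l.
  assert (E : Cmod (Cminus (RtoC 1) (Cmult (RtoC s) w)) ^ 2 = 1 - 2 * s * Re w + s ^ 2 * Cmod w ^ 2)
    by (rewrite !Cmod2_alt; destruct w as [u v]; unfold Re, Im; simpl; ring).
  assert (s * Cmod w ^ 2 <= Re w / 2).
  { apply Rmult_le_compat_r with (r := Cmod w ^ 2) in Hs2; [|lra].
    assert (Cmod w <> 0) by (intro E0; rewrite E0 in Hwn; simpl in Hwn; lra).
    replace (Re w / Cmod w ^ 2 / 2 * Cmod w ^ 2) with (Re w / 2) in Hs2 by (field; assumption). lra. }
  pose proof (Cmod_ge_0 (Cminus (RtoC 1) (Cmult (RtoC s) w))). nra.
Qed.

Lemma near_glued_weaken d p s L L' K K' z : L <= L' -> K <= K' -> 0 < s ->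
  near_glued d p s L K z -> near_glued d p s L' K' z.
Proof.
  intros HL HK Hs [Hc Hi]. split.
  - intros i Hi'. eapply Rle_trans; [apply Hc, Hi'|]. apply Rmult_le_compat_r; lra.
  - eapply Rle_trans; [exact Hi|]. apply Rmult_le_compat_r; [nra | lra].
Qed.

Section GluedPoints.

Variables (d : nat) (f : CC -> nat -> CC) (p : nat -> CC).
Hypothesis f_holo_C2 : forall i, (i < d)%nat ->
  exists gx gy gxx gxy gyx gyy, holo_C2 (fun z => f z i) gx gy gxx gxy gyx gyy.
Hypothesis p_unit : inner d p p = RtoC 1.
Variables N Nx Ny Nxx Nxy Nyx Nyy : CC -> CC.
Hypothesis N_holo_C2 : holo_C2 N Nx Ny Nxx Nxy Nyx Nyy.
Hypothesis N_def : forall z, N z = inner d (f z) p.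

(* The direction [D] is chosen with [D N'(xi) = -1]. *)
Lemma approach_boundary_point xi : Cmod xi = 1 -> (forall i, (i < d)%nat -> f xi i = p i) ->
  0 < Re (Cmult xi (Nx xi)) ->
  exists D L K s0, 0 <= L /\ 0 <= K /\ 0 < s0 /\ forall s, 0 < s <= s0 ->
    udisc (Cplus xi (Cmult (RtoC s) D)) /\ near_glued d p s L K (f (Cplus xi (Cmult (RtoC s) D))).
Proof.
  intros Hxi Hxp Hpos. assert (Hcx : cudisc xi) by (unfold cudisc; lra).
  destruct (inward_direction xi (Nx xi) Hxi Hpos) as [D [s1 [HD [Hs1 Hin]]]].
  assert (HN1 : N xi = RtoC 1)
    by (rewrite N_def, <- p_unit; unfold inner; apply csum_ext; intros i Hi; rewrite Hxp; auto).
  destruct (first_order_taylor_along_segment N Nx Ny Nxx Nxy Nyx Nyy N_holo_C2 xi D Hcx)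
    as [K [s2 [HK [Hs2 HT]]]].
  destruct (uniform_over_coordinates (fun i L s0 => forall s, 0 < s <= s0 ->
      udisc (Cplus xi (Cmult (RtoC s) D)) -> Cmod (Cminus (f (Cplus xi (Cmult (RtoC s) D)) i) (p i)) <= L * s) d)
    as [L [s3 [HL [Hs3 HP]]]].
  { intros i L L' s s' HP HLL Hss s'' Hs'' Hz.
    eapply Rle_trans; [apply HP; [lra | exact Hz]|]. apply Rmult_le_compat_r; lra. }
  { intros i Hi. destruct (f_holo_C2 i Hi) as [gx [gy [gxx [gxy [gyx [gyy HG]]]]]].
    destruct (lipschitz_along_segment _ _ _ _ _ _ _ HG xi D Hcx) as [La [sa [HLa [Hsa HA]]]].
    exists La, sa. split; [exact HLa|]. split; [exact Hsa|].
    intros s Hs Hz. rewrite <- (Hxp i Hi). apply HA; auto. }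
  pose proof (Rmin_l s1 (Rmin s2 s3)). pose proof (Rmin_r s1 (Rmin s2 s3)).
  pose proof (Rmin_l s2 s3). pose proof (Rmin_r s2 s3).
  exists D, L, K, (Rmin s1 (Rmin s2 s3)). split; [exact HL|]. split; [exact HK|].
  split; [repeat apply Rmin_pos; assumption|]. intros s Hs.
  assert (Hz : udisc (Cplus xi (Cmult (RtoC s) D))) by (apply Hin; lra).
  split; [exact Hz|]. split.
  - intros i Hi. apply HP; [exact Hi | lra | exact Hz].
  - specialize (HT s ltac:(lra) Hz). rewrite HN1, HD, N_def in HT.
    replace (Cminus (inner d (f (Cplus xi (Cmult (RtoC s) D))) p) (RtoC (1 - s)))
      with (Cminus (Cminus (inner d (f (Cplus xi (Cmult (RtoC s) D))) p) (RtoC 1)) (Cmult (RtoC s) (Copp (RtoC 1))))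
      by (rewrite RtoC_minus; ring).
    exact HT.
Qed.

Lemma glued_pairs_kernel_bounded xi zeta : Cmod xi = 1 -> Cmod zeta = 1 ->
  (forall i, (i < d)%nat -> f xi i = p i) -> (forall i, (i < d)%nat -> f zeta i = p i) ->
  0 < Re (Cmult xi (Nx xi)) -> 0 < Re (Cmult zeta (Nx zeta)) ->
  exists C, 0 <= C /\ forall delta, 0 < delta -> exists z w, udisc z /\ udisc w /\
    Cmod (Cminus z xi) < delta /\ Cmod (Cminus w zeta) < delta /\
    knormsq (kf d f) (kdiff z w) <= C.
Proof.
  intros Hxi Hzeta Hxp Hzp Hpos1 Hpos2.
  destruct (approach_boundary_point xi Hxi Hxp Hpos1) as [D1 [L1 [K1 [s1 [HL1 [HK1 [Hs1 H1]]]]]]].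
  destruct (approach_boundary_point zeta Hzeta Hzp Hpos2) as [D2 [L2 [K2 [s2 [HL2 [HK2 [Hs2 H2]]]]]]].
  pose proof (Rmax_l L1 L2). pose proof (Rmax_r L1 L2). pose proof (Rmax_l K1 K2). pose proof (Rmax_r K1 K2).
  set (L := Rmax L1 L2) in *. set (K := Rmax K1 K2) in *.
  set (C1 := 2 * INR d * L ^ 2 + 2 * K).
  assert (HC1 : 0 <= C1).
  { unfold C1. pose proof (pos_INR d). assert (0 <= L ^ 2) by apply pow2_ge_0.
    assert (0 <= INR d * L ^ 2) by (apply Rmult_le_pos; assumption). lra. }
  exists (4 * C1). split; [lra|]. intros delta Hdelta.
  pose proof (Cmod_ge_0 D1). pose proof (Cmod_ge_0 D2).
  set (sd := delta / (2 * (Cmod D1 + Cmod D2 + 1))). set (sC := / (4 * (C1 + 1))).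
  assert (Hsd : 0 < sd) by (apply Rdiv_lt_0_compat; lra).
  assert (HsC : 0 < sC) by (apply Rinv_0_lt_compat; lra).
  pose proof (Rmin_l (Rmin s1 s2) (Rmin sd sC)). pose proof (Rmin_r (Rmin s1 s2) (Rmin sd sC)).
  pose proof (Rmin_l s1 s2). pose proof (Rmin_r s1 s2). pose proof (Rmin_l sd sC). pose proof (Rmin_r sd sC).
  set (s := Rmin (Rmin s1 s2) (Rmin sd sC)) in *.
  assert (Hs : 0 < s) by (unfold s; repeat apply Rmin_pos; lra).
  assert (Hsdelta : s <= sd) by lra. assert (HsC1 : s <= sC) by lra.
  destruct (H1 s ltac:(lra)) as [Hz Hnz]. destruct (H2 s ltac:(lra)) as [Hw Hnw].
  exists (Cplus xi (Cmult (RtoC s) D1)), (Cplus zeta (Cmult (RtoC s) D2)).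
  split; [exact Hz|]. split; [exact Hw|].
  assert (Hstep : s * (2 * (Cmod D1 + Cmod D2 + 1)) <= delta).
  { apply Rmult_le_compat_r with (r := 2 * (Cmod D1 + Cmod D2 + 1)) in Hsdelta; [|lra].
    unfold sd in Hsdelta. replace (delta / (2 * (Cmod D1 + Cmod D2 + 1)) * (2 * (Cmod D1 + Cmod D2 + 1)))
      with delta in Hsdelta by (field; lra). lra. }
  split.
  { replace (Cminus (Cplus xi (Cmult (RtoC s) D1)) xi) with (Cmult (RtoC s) D1) by ring.
    rewrite Cmod_RtoC_mult, Rabs_right by lra. nra. }
  split.
  { replace (Cminus (Cplus zeta (Cmult (RtoC s) D2)) zeta) with (Cmult (RtoC s) D2) by ring.
    rewrite Cmod_RtoC_mult, Rabs_right by lra. nra. }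
  rewrite knormsq_kdiff. change (kf d f) with (fun a b => DA_kernel d (f a) (f b)). cbv beta.
  assert (HK : 0 <= K) by lra.
  apply (DA_kernel_difference_bound d p s L K Hs HK p_unit).
  - apply (near_glued_weaken d p s L1 L K1 K); auto.
  - apply (near_glued_weaken d p s L2 L K2 K); auto.
  - assert (s * (4 * (C1 + 1)) <= 1).
    { apply Rmult_le_compat_r with (r := 4 * (C1 + 1)) in HsC1; [|lra].
      unfold sC in HsC1. rewrite Rinv_l in HsC1 by lra. lra. }
    fold C1. nra.
Qed.

End GluedPoints.

(** * Kernel functions near a boundary point *)

Lemma coordinates_close d (f : CC -> nat -> CC) p x0 :
  (forall i, (i < d)%nat -> cont_on_cdisc (fun z => f z i)) -> cudisc x0 ->
  (forall i, (i < d)%nat -> f x0 i = p i) ->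
  forall eps, 0 < eps -> exists delta, 0 < delta /\ forall i u, (i < d)%nat -> cudisc u ->
    Cmod (Cminus u x0) < delta -> Cmod (Cminus (f u i) (p i)) < eps.
Proof.
  intros Hc Hx Hp eps He.
  destruct (uniform_over_coordinates (fun i (_ : R) dl => forall u, cudisc u ->
      Cmod (Cminus u x0) < dl -> Cmod (Cminus (f u i) (p i)) < eps) d) as [_ [dl [_ [Hdl H]]]].
  { intros i L L' s s' HP _ Hs u Hu Hux. apply HP; [exact Hu | lra]. }
  { intros i Hi. destruct (Hc i Hi x0 Hx eps He) as [dl [Hdl H]]. exists 0, dl.
    split; [lra|]. split; [exact Hdl|]. intros u Hu Hux. rewrite <- (Hp i Hi). apply H; auto. }
  exists dl. split; [exact Hdl|]. intros i u Hi Hu Hux. apply H; auto.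
Qed.

Section BoundaryLimit.

Variables (d : nat) (f : CC -> nat -> CC) (p : nat -> CC) (x0 : CC).
Hypothesis f_cont : forall i, (i < d)%nat -> cont_on_cdisc (fun z => f z i).
Hypothesis x0_cdisc : cudisc x0.
Hypothesis f_x0 : forall i, (i < d)%nat -> f x0 i = p i.
Hypothesis p_norm : vnorm d p <= 1.
Hypothesis f_ball : forall x, udisc x -> vnorm d (f x) < 1.

Let kf_lim (b : CC) : CC := Cinv (Cminus (RtoC 1) (inner d p (f b))).

Lemma kf_limit_at_boundary b : udisc b -> forall eta, 0 < eta -> exists delta, 0 < delta /\
  forall u, cudisc u -> Cmod (Cminus u x0) < delta -> Cmod (Cminus (kf d f u b) (kf_lim b)) < eta.
Proof.
  intros Hb eta He. set (y := f b). set (a0 := inner d p y).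
  assert (Ha0 : Cmod a0 < 1).
  { unfold a0. eapply Rle_lt_trans; [apply inner_Cauchy_Schwarz|].
    pose proof (f_ball b Hb). pose proof (vnorm_nonneg d p). pose proof (vnorm_nonneg d y).
    unfold y in *. nra. }
  set (m := 1 - Cmod a0). assert (Hm : 0 < m) by (unfold m; lra).
  assert (H1a0 : m <= Cmod (Cminus (RtoC 1) a0))
    by (pose proof (Cmod_reverse_triangle (RtoC 1) a0) as H1; rewrite Cmod_1 in H1; unfold m; lra).
  set (Y := rsum d (fun i => Cmod (y i))).
  assert (HY : 0 <= Y) by (apply rsum_nonneg; intros; apply Cmod_ge_0).
  set (e := Rmin (m / 2) (eta * m ^ 2 / 4) / (Y + 1)).
  assert (Hem : 0 < Rmin (m / 2) (eta * m ^ 2 / 4)).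
  { assert (0 < m ^ 2) by (apply pow_lt; lra). apply Rmin_pos; [lra | apply Rdiv_lt_0_compat; nra]. }
  assert (He0 : 0 < e) by (unfold e; apply Rdiv_lt_0_compat; lra).
  destruct (coordinates_close d f p x0 f_cont x0_cdisc f_x0 e He0) as [dl [Hdl Hclose]].
  exists dl. split; [exact Hdl|]. intros u Hu Hux.
  set (a := inner d (f u) y).
  assert (Haa : Cmod (Cminus a a0) <= e * Y).
  { unfold a, a0. rewrite <- inner_minus_l. eapply Rle_trans; [apply inner_bound|].
    unfold Y. rewrite <- rsum_scal. apply rsum_le. intros i Hi.
    pose proof (Hclose i u Hi Hu Hux). pose proof (Cmod_ge_0 (y i)). cbv beta. nra. }
  assert (HeY : e * Y <= Rmin (m / 2) (eta * m ^ 2 / 4)).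
  { unfold e. apply Rmult_le_reg_r with (Y + 1); [lra|].
    replace (Rmin (m / 2) (eta * m ^ 2 / 4) / (Y + 1) * Y * (Y + 1))
      with (Rmin (m / 2) (eta * m ^ 2 / 4) * Y) by (field; lra). nra. }
  pose proof (Rmin_l (m / 2) (eta * m ^ 2 / 4)). pose proof (Rmin_r (m / 2) (eta * m ^ 2 / 4)).
  assert (H1a : m / 2 <= Cmod (Cminus (RtoC 1) a)).
  { pose proof (Cmod_reverse_triangle (Cminus (RtoC 1) a0) (Cminus a a0)).
    replace (Cminus (Cminus (RtoC 1) a0) (Cminus a a0)) with (Cminus (RtoC 1) a) in * by ring. lra. }
  unfold kf, kf_lim. fold y a a0.
  rewrite Cmod_Cinv_minus.
  2: { intro E. rewrite E, Cmod_0 in H1a. lra. }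
  2: { intro E. rewrite E, Cmod_0 in H1a0. lra. }
  replace (Cminus (Cminus (RtoC 1) a0) (Cminus (RtoC 1) a)) with (Cminus a a0) by ring.
  assert (0 < Cmod (Cminus (RtoC 1) a) * Cmod (Cminus (RtoC 1) a0)) by nra.
  apply Rmult_lt_reg_r with (Cmod (Cminus (RtoC 1) a) * Cmod (Cminus (RtoC 1) a0)); [assumption|].
  unfold Rdiv. rewrite Rmult_assoc, Rinv_l, Rmult_1_r by lra.
  assert (m / 2 * m <= Cmod (Cminus (RtoC 1) a) * Cmod (Cminus (RtoC 1) a0)) by (apply Rmult_le_compat; lra).
  nra.
Qed.

Lemma keval_limit_at_boundary v : List.Forall (fun q => udisc (snd q)) v ->
  forall eta, 0 < eta -> exists delta, 0 < delta /\ forall u, cudisc u -> Cmod (Cminus u x0) < delta ->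
    Cmod (Cminus (keval (kf d f) v u) (lsum v (fun q => Cmult (fst q) (kf_lim (snd q))))) < eta.
Proof.
  intros Hv. induction Hv as [|q v Hq Hv IH]; intros eta He.
  - exists 1. split; [lra|]. intros. rewrite keval_lsum, !lsum_nil.
    replace (Cminus (RtoC 0) (RtoC 0)) with (RtoC 0) by ring. rewrite Cmod_0. exact He.
  - pose proof (Cmod_ge_0 (fst q)).
    destruct (IH (eta / 2) ltac:(lra)) as [d1 [Hd1 H1]].
    destruct (kf_limit_at_boundary (snd q) Hq (eta / 2 / (Cmod (fst q) + 1))) as [d2 [Hd2 H2]];
      [apply Rdiv_lt_0_compat; lra|].
    exists (Rmin d1 d2). split; [apply Rmin_pos; auto|]. intros u Hu Hn.
    pose proof (Rmin_l d1 d2). pose proof (Rmin_r d1 d2).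
    rewrite keval_lsum, !lsum_cons, <- keval_lsum.
    pose proof (H1 u Hu ltac:(lra)).
    set (S := lsum v (fun q0 => Cmult (fst q0) (kf_lim (snd q0)))) in *.
    replace (Cminus (Cplus (keval (kf d f) v u) (Cmult (fst q) (kf d f u (snd q))))
                    (Cplus S (Cmult (fst q) (kf_lim (snd q)))))
      with (Cplus (Cminus (keval (kf d f) v u) S) (Cmult (fst q) (Cminus (kf d f u (snd q)) (kf_lim (snd q)))))
      by ring.
    eapply Rle_lt_trans; [apply Cmod_triangle|]. rewrite Cmod_mult.
    pose proof (H2 u Hu ltac:(lra)) as A2.
    pose proof (Cmod_ge_0 (Cminus (kf d f u (snd q)) (kf_lim (snd q)))).
    apply Rmult_lt_compat_r with (r := Cmod (fst q) + 1) in A2; [|lra].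
    replace (eta / 2 / (Cmod (fst q) + 1) * (Cmod (fst q) + 1)) with (eta / 2) in A2 by (field; lra).
    nra.
Qed.

End BoundaryLimit.

(** * Functionals of an RKHS cannot separate glued points *)

Lemma knormsq_app {X} (K : X -> X -> CC) s t : (forall a b, K b a = Cconj (K a b)) ->
  knormsq K (s ++ t) = knormsq K s + 2 * Re (kform K s t) + knormsq K t.
Proof.
  intros HK. rewrite !knormsq_kform, kform_app_l, !kform_app_r, (kform_herm K s t HK).
  destruct (kform K s s), (kform K s t), (kform K t t). unfold Re; simpl. ring.
Qed.

Lemma kpair_app {X} (s t : kcomb X) h : kpair (s ++ t) h = Cplus (kpair s h) (kpair t h).
Proof. apply lsum_app. Qed.

Section GluedFunctional.

Variables (X : Type) (Dom : X -> Prop) (K : X -> X -> CC) (h : X -> CC) (M C : R) (c : CC).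
Hypothesis K_herm : forall a b, K b a = Cconj (K a b).
Hypothesis M_nonneg : 0 <= M.
Hypothesis pairing_bound : forall v, List.Forall (fun p => Dom (snd p)) v ->
  Cmod (kpair v h) <= M * sqrt (knormsq K v).
Hypothesis C_nonneg : 0 <= C.
Hypothesis separating_pairs : forall v, List.Forall (fun p => Dom (snd p)) v ->
  forall eps, 0 < eps -> exists z w, Dom z /\ Dom w /\ knormsq K (kdiff z w) <= C /\
    Cmod (kform K v (kdiff z w)) < eps /\ Cmod (Cminus (Cminus (h z) (h w)) c) < eps.

(* Adding [k_z - k_w] raises the squared norm by at most [C + 2] (the cross term
   is small) but raises the pairing with [h] in the direction [c] by [|c|^2 / 2]. *)
Lemma growing_combinations : 0 < Cmod c -> forall n : nat, exists v,
  List.Forall (fun p => Dom (snd p)) v /\ knormsq K v <= INR n * (C + 2) /\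
  INR n * Cmod c ^ 2 / 2 <= Re (Cmult (Cconj c) (kpair v h)).
Proof.
  intros Hc n. induction n as [|n [v [Hv [Hkn Hre]]]].
  - exists []. split; [constructor|]. simpl. unfold knormsq, kpair, lsum. simpl. lra.
  - destruct (separating_pairs v Hv (Rmin 1 (Cmod c / 2)) ltac:(apply Rmin_pos; lra))
      as [z [w [Hz [Hw [Hkd [Hcross Hsep]]]]]].
    pose proof (Rmin_l 1 (Cmod c / 2)). pose proof (Rmin_r 1 (Cmod c / 2)).
    exists (v ++ kdiff z w). rewrite S_INR. split; [|split].
    + apply List.Forall_app. split; [exact Hv | repeat constructor; assumption].
    + rewrite (knormsq_app K v _ K_herm).
      pose proof (re_le_Cmod (kform K v (kdiff z w))). pose proof (Rle_abs (Re (kform K v (kdiff z w)))).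
      lra.
    + rewrite kpair_app, kpair_kdiff.
      set (Y := Cminus (Cminus (h z) (h w)) c) in *.
      replace (Cmult (Cconj c) (Cplus (kpair v h) (Cminus (h z) (h w))))
        with (Cplus (Cmult (Cconj c) (kpair v h)) (Cplus (Cmult (Cconj c) c) (Cmult (Cconj c) Y)))
        by (unfold Y; ring).
      change (Re (Cplus (Cmult (Cconj c) (kpair v h)) (Cplus (Cmult (Cconj c) c) (Cmult (Cconj c) Y))))
        with (Re (Cmult (Cconj c) (kpair v h)) + (Re (Cmult (Cconj c) c) + Re (Cmult (Cconj c) Y))).
      assert (E1 : Re (Cmult (Cconj c) c) = Cmod c ^ 2)
        by (rewrite Cmult_comm, <- Cmod2_conj, re_RtoC; reflexivity).
      assert (E2 : - (Cmod c * Cmod Y) <= Re (Cmult (Cconj c) Y)).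
      { pose proof (re_le_Cmod (Cmult (Cconj c) Y)) as H1. rewrite Cmod_mult, Cmod_conj in H1.
        apply Rabs_le_between in H1. lra. }
      pose proof (Cmod_ge_0 Y). nra.
Qed.

Lemma glued_functional_zero : c = RtoC 0.
Proof.
  apply NNPP. intros Hc0.
  assert (Hc : 0 < Cmod c) by (apply Cmod_gt_0; exact Hc0).
  destruct (INR_archimed (Cmod c ^ 2) (4 * M ^ 2 * (C + 2)) ltac:(nra)) as [n Hn].
  destruct (growing_combinations Hc n) as [v [Hv [Hkn Hre]]].
  specialize (pairing_bound v Hv).
  pose proof (pos_INR n).
  assert (A1 : Re (Cmult (Cconj c) (kpair v h)) <= Cmod c * Cmod (kpair v h)).
  { eapply Rle_trans; [apply Rle_abs|]. eapply Rle_trans; [apply re_le_Cmod|].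
    rewrite Cmod_mult, Cmod_conj. lra. }
  assert (A2 : sqrt (knormsq K v) <= sqrt (INR n * (C + 2))) by (apply sqrt_le_1_alt; exact Hkn).
  assert (A3 : sqrt (INR n * (C + 2)) ^ 2 = INR n * (C + 2))
    by (rewrite <- Rsqr_pow2; apply Rsqr_sqrt; nra).
  assert (A4 : INR n * Cmod c / 2 <= M * sqrt (INR n * (C + 2))).
  { apply Rmult_le_reg_l with (Cmod c); [exact Hc|].
    assert (Cmod c * Cmod (kpair v h) <= Cmod c * (M * sqrt (INR n * (C + 2)))).
    { apply Rmult_le_compat_l; [lra|]. eapply Rle_trans; [exact pairing_bound|].
      apply Rmult_le_compat_l; [exact M_nonneg | exact A2]. }
    nra. }
  pose proof (sqrt_pos (INR n * (C + 2))).
  assert (A5 : (INR n * Cmod c / 2) ^ 2 <= M ^ 2 * (INR n * (C + 2))).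
  { rewrite <- A3. replace (M ^ 2 * sqrt (INR n * (C + 2)) ^ 2) with ((M * sqrt (INR n * (C + 2))) ^ 2) by ring.
    apply pow_incr. split; [nra | exact A4]. }
  assert (INR n > 0) by nra.
  nra.
Qed.

End GluedFunctional.

(** * Analytic discs attached to the sphere *)

Lemma Re_inner_le_vnorm d x p : vnorm d p = 1 -> Re (inner d x p) <= vnorm d x.
Proof.
  intros Hp. eapply Rle_trans; [apply Rle_abs|]. eapply Rle_trans; [apply re_le_Cmod|].
  eapply Rle_trans; [apply inner_Cauchy_Schwarz|]. rewrite Hp. lra.
Qed.

Section AttachedDisc.

Variables (d : nat) (V : (nat -> CC) -> Prop) (f : CC -> nat -> CC).
Hypothesis HV : analytic_disc_attached d V f.

Lemma attached_disc_ball x : udisc x -> vnorm d (f x) < 1.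
Proof. intros Hx. apply (proj1 (proj2 (proj2 HV)) x Hx). Qed.

Lemma attached_disc_closed_ball x : cudisc x -> vnorm d (f x) <= 1.
Proof.
  intros Hx. destruct (Rle_lt_or_eq_dec _ _ Hx) as [Hl|He].
  - left. apply attached_disc_ball, Hl.
  - right. destruct HV as [_ [_ [_ [_ [_ [_ [_ [_ Hbd]]]]]]]]. apply (Hbd x Hx), He.
Qed.

Lemma attached_disc_sphere x : Cmod x = 1 -> vnorm d (f x) = 1.
Proof.
  intros Hx. destruct HV as [_ [_ [_ [_ [_ [_ [_ [_ Hbd]]]]]]]].
  apply Hbd; [unfold cudisc; lra | exact Hx].
Qed.

Lemma attached_disc_coords_holo_C2 i : (i < d)%nat ->
  exists gx gy gxx gxy gyx gyy, holo_C2 (fun z => f z i) gx gy gxx gxy gyx gyy.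
Proof.
  intros Hi. destruct HV as [_ [_ [_ [_ [Hexd [_ [_ [HC2 _]]]]]]]].
  apply holo_C2_of_C2_on_cdisc; [intros x Hx; apply Hexd, Hx | apply HC2, Hi].
Qed.

Lemma attached_disc_coords_cont i : (i < d)%nat -> cont_on_cdisc (fun z => f z i).
Proof.
  intros Hi. destruct (attached_disc_coords_holo_C2 i Hi) as [gx [gy [gxx [gxy [gyx [gyy HG]]]]]].
  apply HG.
Qed.

(* The Hopf lemma, applied to [<f z, f xi>], makes [f] move transversally to the
   sphere at both glued points. *)
Lemma attached_disc_glued_pairs xi zeta : Cmod xi = 1 -> Cmod zeta = 1 -> f xi = f zeta ->
  exists C, 0 <= C /\ forall delta, 0 < delta -> exists z w, udisc z /\ udisc w /\
    Cmod (Cminus z xi) < delta /\ Cmod (Cminus w zeta) < delta /\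
    knormsq (kf d f) (kdiff z w) <= C.
Proof.
  intros Hxi Hzeta Hf. set (p := f xi).
  assert (Hvp : vnorm d p = 1) by (apply attached_disc_sphere, Hxi).
  assert (Hpp : inner d p p = RtoC 1)
    by (rewrite inner_diag_real, <- vnorm_sq, Hvp; f_equal; ring).
  destruct (holo_C2_lincomb f (fun i => Cconj (p i)) d attached_disc_coords_holo_C2)
    as [Nx [Ny [Nxx [Nxy [Nyx [Nyy HN]]]]]].
  set (N := fun z => csum d (fun i => Cmult (Cconj (p i)) (f z i))) in HN.
  assert (HNdef : forall z, N z = inner d (f z) p) by (intros z; unfold N, inner; apply csum_ext; intros; ring).
  assert (Hle : forall z, cudisc z -> Re (N z) <= 1).
  { intros z Hz. rewrite HNdef. eapply Rle_trans; [apply Re_inner_le_vnorm, Hvp|].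
    apply attached_disc_closed_ball, Hz. }
  assert (Hlt : forall z, udisc z -> Re (N z) < 1).
  { intros z Hz. rewrite HNdef. eapply Rle_lt_trans; [apply Re_inner_le_vnorm, Hvp|].
    apply attached_disc_ball, Hz. }
  assert (HN1 : N xi = RtoC 1) by (rewrite HNdef; exact Hpp).
  assert (HN2 : N zeta = RtoC 1) by (rewrite HNdef, <- Hf; exact Hpp).
  exact (glued_pairs_kernel_bounded d f p attached_disc_coords_holo_C2 Hpp N Nx Ny Nxx Nxy Nyx Nyy HN HNdef
              xi zeta Hxi Hzeta (fun i _ => eq_refl) (fun i _ => f_equal (fun y => y i) (eq_sym Hf))
              (hopf_lemma N Nx Ny Nxx Nxy Nyx Nyy HN Hle Hlt xi Hxi HN1)
              (hopf_lemma N Nx Ny Nxx Nxy Nyx Nyy HN Hle Hlt zeta Hzeta HN2)).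
Qed.

Lemma attached_disc_separating_pairs xi zeta C h hbar : Cmod xi = 1 -> Cmod zeta = 1 -> f xi = f zeta ->
  cont_on_cdisc hbar -> (forall z, udisc z -> hbar z = h z) ->
  (forall delta, 0 < delta -> exists z w, udisc z /\ udisc w /\
     Cmod (Cminus z xi) < delta /\ Cmod (Cminus w zeta) < delta /\ knormsq (kf d f) (kdiff z w) <= C) ->
  forall v, List.Forall (fun q => udisc (snd q)) v -> forall eps, 0 < eps ->
    exists z w, udisc z /\ udisc w /\ knormsq (kf d f) (kdiff z w) <= C /\
      Cmod (kform (kf d f) v (kdiff z w)) < eps /\
      Cmod (Cminus (Cminus (h z) (h w)) (Cminus (hbar xi) (hbar zeta))) < eps.
Proof.
  intros Hxi Hzeta Hf Hcont Hext Hpairs v Hv eps Heps.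
  assert (Hcx : cudisc xi) by (unfold cudisc; lra). assert (Hcz : cudisc zeta) by (unfold cudisc; lra).
  assert (Hvp : vnorm d (f xi) <= 1) by (rewrite (attached_disc_sphere xi Hxi); lra).
  destruct (keval_limit_at_boundary d f (f xi) xi attached_disc_coords_cont Hcx (fun i _ => eq_refl)
              Hvp attached_disc_ball v Hv (eps / 2) ltac:(lra)) as [d1 [Hd1 H1]].
  destruct (keval_limit_at_boundary d f (f xi) zeta attached_disc_coords_cont Hcz
              (fun i _ => f_equal (fun y => y i) (eq_sym Hf)) Hvp attached_disc_ball v Hv (eps / 2) ltac:(lra))
    as [d2 [Hd2 H2]].
  destruct (Hcont xi Hcx (eps / 2) ltac:(lra)) as [d3 [Hd3 H3]].
  destruct (Hcont zeta Hcz (eps / 2) ltac:(lra)) as [d4 [Hd4 H4]].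
  pose proof (Rmin_l (Rmin d1 d2) (Rmin d3 d4)). pose proof (Rmin_r (Rmin d1 d2) (Rmin d3 d4)).
  pose proof (Rmin_l d1 d2). pose proof (Rmin_r d1 d2). pose proof (Rmin_l d3 d4). pose proof (Rmin_r d3 d4).
  destruct (Hpairs (Rmin (Rmin d1 d2) (Rmin d3 d4)) ltac:(repeat apply Rmin_pos; lra))
    as [z [w [Hz [Hw [Hzx [Hwz Hkd]]]]]].
  exists z, w. split; [exact Hz|]. split; [exact Hw|]. split; [exact Hkd|]. split.
  - rewrite kform_kdiff.
    specialize (H1 z (udisc_cudisc z Hz) ltac:(lra)). specialize (H2 w (udisc_cudisc w Hw) ltac:(lra)).
    set (S := lsum v _) in *.
    replace (Cminus (keval (kf d f) v z) (keval (kf d f) v w))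
      with (Cminus (Cminus (keval (kf d f) v z) S) (Cminus (keval (kf d f) v w) S)) by ring.
    unfold Cminus at 1. eapply Rle_lt_trans; [apply Cmod_triangle|]. rewrite Cmod_opp. lra.
  - rewrite <- (Hext z Hz), <- (Hext w Hw).
    specialize (H3 z (udisc_cudisc z Hz) ltac:(lra)). specialize (H4 w (udisc_cudisc w Hw) ltac:(lra)).
    replace (Cminus (Cminus (hbar z) (hbar w)) (Cminus (hbar xi) (hbar zeta)))
      with (Cminus (Cminus (hbar z) (hbar xi)) (Cminus (hbar w) (hbar zeta))) by ring.
    unfold Cminus at 1. eapply Rle_lt_trans; [apply Cmod_triangle|]. rewrite Cmod_opp. lra.
Qed.

End AttachedDisc.

Theorem theorem2p3 (d : nat) (V : (nat -> Complex.C) -> Prop) (f : Complex.C -> nat -> Complex.C)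
  (HV : analytic_disc_attached d V f)
  (xi zeta : Complex.C) (Hxi : Cmod xi = 1) (Hzeta : Cmod zeta = 1) (Hne : xi <> zeta)
  (Hf : f xi = f zeta)
  (h : Complex.C -> Complex.C) (Hh : in_Hf d f h)
  (hbar : Complex.C -> Complex.C) (Hcont : cont_on_cdisc hbar)
  (Hext : forall z, udisc z -> hbar z = h z) :
  hbar xi = hbar zeta.
Proof.
  destruct (attached_disc_glued_pairs d V f HV xi zeta Hxi Hzeta Hf) as [C [HC Hpairs]].
  destruct (in_RKHS_pairing_bound CC udisc (kf d f) (kf_psd d f (attached_disc_ball d V f HV))
              (kf_herm d f) h Hh) as [M [HM Hbound]].
  apply Ceq_minus, (glued_functional_zero CC udisc (kf d f) h M C _ (kf_herm d f) HM Hbound HC).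
  exact (attached_disc_separating_pairs d V f HV xi zeta C h hbar Hxi Hzeta Hf Hcont Hext Hpairs).
Qed.
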